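(* Suppose $f$ satisfies (I), $f(\cdot,i,\mathbf q)\in C^1([0,\infty))$ for all $i,\mathbf q$, $f_t$ satisfies (I), and condition (R) holds. Let $Q^*\in\mathcal Q$ be a weak equilibrium and let $R=\{(i,Q)\in S\times(\mathcal Q\setminus\{Q^*\}):\Gamma^{Q^*}_i(Q^*_i)=\Gamma^{Q^*}_i(Q_i)\}$. If $\Lambda^{Q^*}(i,Q^* )>\Lambda^{Q^*}(i,Q)$ for all $(i,Q)\in R$, then $Q^*$ is a strong equilibrium. If $\Lambda^{Q^*}(i,Q^* )<\Lambda^{Q^*}(i,Q)$ for some $(i,Q)\in R$, then $Q^*$ is not a strong equilibrium.
   Context: Let $S=\{1,\dots,N\}$. For $i\in S$ let $E_i=\{q\in\mathbb R^N: q_j\ge0\text{ for }j\ne i,\ q_i=-\sum_{j\ne i}q_j\}$ and $D_i\subseteq E_i$ given; $\mathcal Q=\{Q\in\mathbb R^{N\times N}: Q_i\in D_i\ \forall i\}$, $Q_i$ the $i$-th row. For $Q\in\mathcal Q$, $X$ is a time-homogeneous continuous-time Markov chain on $S$ with generator $Q$, $\mathbb E_{i,Q}$ the expectation given $X_0=i$. A payoff function $f$ assigns $f(t,i,\mathbf q)\in\mathbb R$ to $t\ge0,i\in S,\mathbf q\in D_i$. Condition (I) for $g$: $\int_0^\infty\sup_{i\in S,\mathbf q\in D_i,\|\mathbf q\|\le c}|g(t,i,\mathbf q)|dt<\infty$ for all $c>0$. Condition (R): there is $r(t,\varepsilon;i,\mathbf q)$, continuous in $\varepsilon$, with $|f(t+\varepsilon,i,\mathbf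 q)-f(t,i,\mathbf q)-\varepsilon f_t(t,i,\mathbf q)|\le r(t,\varepsilon;i,\mathbf q)$, $\int_0^\infty r(t,\varepsilon;i,\mathbf q)dt<\infty$ for small $\varepsilon>0$, and $\varepsilon\mapsto r/\varepsilon$ nondecreasing. $F(i,Q)=\mathbb E_{i,Q}[\int_0^\infty f(t,X_t,Q_{X_t})dt]$, $G(i,Q)=\mathbb E_{i,Q}[\int_0^\infty f_t(t,X_t,Q_{X_t})dt]$, with vectors $F(Q),G(Q)\in\mathbb R^N$. $Q\otimes_\varepsilon Q'$: generator $Q$ on $[0,\varepsilon]$ then $Q'$ on $(\varepsilon,\infty)$, with expected payoff $F(i,Q\otimes_\varepsilon Q')$. Weak equilibrium: $\liminf_{\varepsilon\downarrow0}\varepsilon^{-1}(F(i,Q^* )-F(i,Q\otimes_\varepsilon Q^* ))\ge0$ for all $Q,i$. Strong equilibrium: for every $i,Q$ there is $\varepsilon>0$ with $F(i,Q^* )\ge F(i,Q\otimes_{\varepsilon'}Q^* )$ for all $0<\varepsilon'\le\varepsilon$. $\Gamma^{Q^*}_i(\mathbf q)=f(0,i,\mathbf q)+\mathbf q\cdot F(Q^* )$; $\Gamma^{Q^*}(Q)=(\Gamma^{Q^*}_1(Q_1),\dots,\Gamma^{Q^*}_N(Q_N))$; $\Lambda^{Q^*}(i,Q)=f_t(0,i,Q_i)+Q_i\cdot(2G(Q^* )+\Gamma^{Q^*}(Q))$. *)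

From Stdlib Require Import Reals Lra ClassicalEpsilon Factorial.
Open Scope R_scope.

(* States are 0..N-1 (the paper's 1..N).  A row vector / generator row is a
   function nat -> R, required to vanish at indices >= N; a matrix is
   nat -> nat -> R, with zero rows at indices >= N. *)

Fixpoint sumN (n : nat) (g : nat -> R) : R :=
  match n with O => 0 | S m => sumN m g + g m end.

Definition vnorm (N : nat) (q : nat -> R) : R := sumN N (fun j => Rabs (q j)).

Definition InE (N : nat) (i : nat) (q : nat -> R) : Prop :=
  (forall j, (j < N)%nat -> j <> i -> 0 <= q j) /\
  q i = - sumN N (fun j => if Nat.eq_dec j i then 0 else q j) /\
  (forall j, (N <= j)%nat -> q j = 0).

Definition InQ (N : nat) (D : nat -> (nat -> R) -> Prop)
  (Q : nat -> nat -> R) : Prop :=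
  (forall i, (i < N)%nat -> D i (Q i)) /\
  (forall i j, (N <= i)%nat -> Q i j = 0).

Definition matmul (N : nat) (A B : nat -> nat -> R) : nat -> nat -> R :=
  fun i j => sumN N (fun k => A i k * B k j).

Fixpoint matpow (N : nat) (Q : nat -> nat -> R) (k : nat) : nat -> nat -> R :=
  match k with
  | O => fun i j => if Nat.eq_dec i j then 1 else 0
  | S m => matmul N (matpow N Q m) Q
  end.

(* transition probabilities P(X_t = j | X_0 = i) = (exp(tQ))_{ij} *)
Definition trans (N : nat) (Q : nat -> nat -> R) (t : R) (i j : nat) : R :=
  epsilon (inhabits 0)
    (fun l => infinite_sum (fun k => t ^ k / INR (fact k) * matpow N Q k i j) l).

Definition improper_int0 (g : R -> R) (l : R) : Prop :=
  (forall T, 0 <= T -> inhabited (Riemann_integrable g 0 T)) /\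
  forall e, e > 0 -> exists T0, forall T (pr : Riemann_integrable g 0 T),
      T0 <= T -> Rabs (RiemannInt pr - l) < e.

Definition Int0inf (g : R -> R) : R := epsilon (inhabits 0) (improper_int0 g).

(* "the (nonnegative) function described by P has finite integral over [0,oo)":
   P t y means "y <= value at t"; the lower integral (sup of integrals of
   Riemann integrable minorants over [0,T]) is finite. *)
Definition fin_int (P : R -> R -> Prop) : Prop :=
  exists M, forall T (phi : R -> R) (pr : Riemann_integrable phi 0 T),
    0 <= T -> (forall t, 0 <= t <= T -> P t (phi t)) -> RiemannInt pr <= M.

Definition Payoff := R -> nat -> (nat -> R) -> R.

Definition condI (N : nat) (D : nat -> (nat -> R) -> Prop) (g : Payoff) : Prop :=
  forall c, c > 0 ->
    fin_int (fun t y => forall d, d > 0 ->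
       exists i q, (i < N)%nat /\ D i q /\ vnorm N q <= c /\ y - d <= Rabs (g t i q)).

Definition C1_with_deriv (N : nat) (D : nat -> (nat -> R) -> Prop) (f ft : Payoff) : Prop :=
  forall i q, (i < N)%nat -> D i q ->
    (forall t, 0 <= t -> forall e, e > 0 -> exists d, d > 0 /\
       forall h, h <> 0 -> Rabs h < d -> 0 <= t + h ->
         Rabs ((f (t + h) i q - f t i q) / h - ft t i q) < e) /\
    (forall t, 0 <= t -> forall e, e > 0 -> exists d, d > 0 /\
       forall s, 0 <= s -> Rabs (s - t) < d -> Rabs (ft s i q - ft t i q) < e).

Definition condR (N : nat) (D : nat -> (nat -> R) -> Prop) (f ft : Payoff) : Prop :=
  exists r : R -> R -> nat -> (nat -> R) -> R,
    forall i q, (i < N)%nat -> D i q ->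
      (forall t e, 0 <= t -> e > 0 ->
          Rabs (f (t + e) i q - f t i q - e * ft t i q) <= r t e i q) /\
      (forall t e0, 0 <= t -> e0 > 0 -> forall a, a > 0 -> exists d, d > 0 /\
          forall e, e > 0 -> Rabs (e - e0) < d -> Rabs (r t e i q - r t e0 i q) < a) /\
      (exists e1, e1 > 0 /\ forall e, 0 < e < e1 ->
          fin_int (fun t y => y <= r t e i q)) /\
      (forall t e e', 0 <= t -> 0 < e -> e <= e' -> r t e i q / e <= r t e' i q / e').

Definition Fval (N : nat) (f : Payoff) (Q : nat -> nat -> R) (i : nat) : R :=
  Int0inf (fun t => sumN N (fun j => trans N Q t i j * f t j (Q j))).

Definition Fcomp (N : nat) (f : Payoff) (Q : nat -> nat -> R) (eps : R)
  (Q' : nat -> nat -> R) (i : nat) : R :=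
  Int0inf (fun t =>
    if Rle_dec t eps then sumN N (fun j => trans N Q t i j * f t j (Q j))
    else sumN N (fun j =>
           sumN N (fun k => trans N Q eps i k * trans N Q' (t - eps) k j)
           * f t j (Q' j))).

Definition weak_eq (N : nat) (D : nat -> (nat -> R) -> Prop) (f : Payoff)
  (Qs : nat -> nat -> R) : Prop :=
  forall Q i, InQ N D Q -> (i < N)%nat ->
    forall d, d > 0 -> exists e0, e0 > 0 /\ forall e, 0 < e < e0 ->
      (Fval N f Qs i - Fcomp N f Q e Qs i) / e > - d.

Definition strong_eq (N : nat) (D : nat -> (nat -> R) -> Prop) (f : Payoff)
  (Qs : nat -> nat -> R) : Prop :=
  forall Q i, InQ N D Q -> (i < N)%nat ->
    exists e, e > 0 /\ forall e', 0 < e' <= e -> Fval N f Qs i >= Fcomp N f Q e' Qs i.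

Definition Gamma (N : nat) (f : Payoff) (Qs : nat -> nat -> R) (i : nat) (q : nat -> R) : R :=
  f 0 i q + sumN N (fun j => q j * Fval N f Qs j).

Definition Lambda (N : nat) (f ft : Payoff) (Qs : nat -> nat -> R) (i : nat)
  (Q : nat -> nat -> R) : R :=
  ft 0 i (Q i) + sumN N (fun j => Q i j * (2 * Fval N ft Qs j + Gamma N f Qs j (Q j))).

Definition InRset (N : nat) (D : nat -> (nat -> R) -> Prop) (f : Payoff)
  (Qs : nat -> nat -> R) (i : nat) (Q : nat -> nat -> R) : Prop :=
  (i < N)%nat /\ InQ N D Q /\ Q <> Qs /\
  Gamma N f Qs i (Qs i) = Gamma N f Qs i (Q i).

(* Write [D(e) = F(i,Qs) - F(i, Q (x)_e Qs)].  By the Markov property at time [e],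
   [F(i, Q (x)_e Qs) = int_0^e E_{i,Q} f(t, X_t, Q_{X_t}) dt + sum_k P^Q_e(i,k) H_k(e)], where [H_k(e)]
   is the value from [k] under [Qs] with the clock advanced by [e].  Expanding
   [P^Q_e = I + e Q + e^2 Q^2 / 2 + O(e^3)], the integrand to first order (f is C^1) and
   [H_k(e) = F(k,Qs) + e G(k,Qs) + o(e)] (condition (R)) gives [D(e) = c1 e + c2 e^2 + o(e^2)] with
   [c1 = Gamma_i(Qs_i) - Gamma_i(Q_i)] and [2 c2 = Lambda(i,Qs) - Lambda(i,Q)].  Weak equilibrium
   forces [c1 >= 0]; if [c1 > 0] then [D > 0] near [0], and on [R], where [c1 = 0], the sign of [D]
   near [0] is that of [c2]. *)

From Stdlib Require Import Reals Lra Lia ClassicalEpsilon Factorial.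
From Coquelicot Require Import Coquelicot.
Open Scope R_scope.

(** * Finite sums and matrices *)

Definition kron (i j : nat) : R := if Nat.eq_dec i j then 1 else 0.

Lemma sumN_ext n g h : (forall j, (j < n)%nat -> g j = h j) -> sumN n g = sumN n h.
Proof.
  induction n as [|n IH]; intros E; simpl; [reflexivity|].
  rewrite IH, E; [reflexivity | lia | intros; apply E; lia].
Qed.

Lemma sumN_add n g h : sumN n (fun j => g j + h j) = sumN n g + sumN n h.
Proof. induction n; simpl; [lra | rewrite IHn; lra]. Qed.

Lemma sumN_sub n g h : sumN n (fun j => g j - h j) = sumN n g - sumN n h.
Proof. induction n; simpl; [lra | rewrite IHn; lra]. Qed.

Lemma sumN_scal_l n c g : sumN n (fun j => c * g j) = c * sumN n g.
Proof. induction n; simpl; [lra | rewrite IHn; lra]. Qed.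

Lemma sumN_scal_r n c g : sumN n (fun j => g j * c) = sumN n g * c.
Proof. induction n; simpl; [lra | rewrite IHn; lra]. Qed.

Lemma sumN_const n c : sumN n (fun _ => c) = INR n * c.
Proof. induction n; simpl sumN; [simpl; lra | rewrite IHn, S_INR; lra]. Qed.

Lemma sumN_zero n : sumN n (fun _ => 0) = 0.
Proof. rewrite sumN_const; lra. Qed.

Lemma sumN_exchange n m g :
  sumN n (fun i => sumN m (fun j => g i j)) = sumN m (fun j => sumN n (fun i => g i j)).
Proof. induction n; simpl; [now rewrite sumN_zero | now rewrite IHn, <- sumN_add]. Qed.

Lemma sumN_abs n g : Rabs (sumN n g) <= sumN n (fun j => Rabs (g j)).
Proof.
  induction n; simpl; [rewrite Rabs_R0; lra|].
  eapply Rle_trans; [apply Rabs_triang | lra].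
Qed.

Lemma sumN_le n g h : (forall j, (j < n)%nat -> g j <= h j) -> sumN n g <= sumN n h.
Proof.
  induction n; simpl; intros H; [lra|].
  assert (g n <= h n) by (apply H; lia).
  assert (sumN n g <= sumN n h) by (apply IHn; intros; apply H; lia).
  lra.
Qed.

Lemma sumN_ge0 n g : (forall j, (j < n)%nat -> 0 <= g j) -> 0 <= sumN n g.
Proof. intros H. rewrite <- (sumN_zero n). now apply sumN_le. Qed.

Lemma sumN_ge_term n g j :
  (forall k, (k < n)%nat -> 0 <= g k) -> (j < n)%nat -> g j <= sumN n g.
Proof.
  induction n; intros H Hj; [lia|]. simpl.
  assert (0 <= g n) by (apply H; lia).
  destruct (Nat.eq_dec j n) as [->|].
  - assert (0 <= sumN n g) by (apply sumN_ge0; intros; apply H; lia). lra.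
  - assert (g j <= sumN n g) by (apply IHn; [intros; apply H|]; lia). lra.
Qed.

Lemma sumN_kron_l n i g : (i < n)%nat -> sumN n (fun l => kron i l * g l) = g i.
Proof.
  induction n; intros Hi; [lia|]. simpl. unfold kron at 2.
  destruct (Nat.eq_dec i n) as [->|].
  - rewrite (sumN_ext _ _ (fun _ => 0)), sumN_zero; [lra|].
    intros j Hj. unfold kron. destruct (Nat.eq_dec n j); [lia | lra].
  - rewrite IHn by lia. lra.
Qed.

Lemma sumN_kron_r n j g : (j < n)%nat -> sumN n (fun l => g l * kron l j) = g j.
Proof.
  intros Hj. rewrite <- (sumN_kron_l n j g Hj). apply sumN_ext. intros l _.
  unfold kron. destruct (Nat.eq_dec l j), (Nat.eq_dec j l); subst; try lia; lra.
Qed.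

Lemma sumN_split_at n i q : (i < n)%nat ->
  sumN n q = sumN n (fun j => if Nat.eq_dec j i then 0 else q j) + q i.
Proof.
  induction n; intros Hi; [lia|]. simpl.
  destruct (Nat.eq_dec n i) as [->|].
  - rewrite (sumN_ext _ (fun j => if Nat.eq_dec j i then 0 else q j) q); [lra|].
    intros j Hj. destruct (Nat.eq_dec j i); [lia | reflexivity].
  - rewrite IHn by lia. lra.
Qed.

Lemma sumN_sum_f_R0 n g : sumN (S n) g = sum_f_R0 g n.
Proof. induction n; [simpl; lra|]. change (sumN (S n) g + g (S n) = sum_f_R0 g (S n)). now rewrite IHn. Qed.

Lemma sumN_shift n g : sumN (S n) g = g O + sumN n (fun k => g (S k)).
Proof. induction n; [simpl; lra|]. change (sumN (S n) g + g (S n) = g O + (sumN n (fun k => g (S k)) + g (S n))). rewrite IHn. lra. Qed.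

Lemma sumN_bounded n (b : nat -> R -> R) :
  (forall j, (j < n)%nat -> exists M, forall T, 0 <= T -> b j T <= M) ->
  exists M, forall T, 0 <= T -> sumN n (fun j => b j T) <= M.
Proof.
  induction n; intros H; [exists 0; intros; simpl; lra|].
  destruct IHn as [M1 A]; [intros; apply H; lia|].
  destruct (H n ltac:(lia)) as [M2 B].
  exists (M1 + M2). intros T HT. simpl. specialize (A T HT). specialize (B T HT). lra.
Qed.

Lemma sumN_mul_assoc n (a : nat -> R) (b : nat -> nat -> R) (c : nat -> R) :
  sumN n (fun j => sumN n (fun k => a k * b k j) * c j) = sumN n (fun k => a k * sumN n (fun j => b k j * c j)).
Proof.
  rewrite (sumN_ext _ _ (fun j => sumN n (fun k => a k * (b k j * c j))))
    by (intros; rewrite <- sumN_scal_r; apply sumN_ext; intros; ring).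
  rewrite sumN_exchange. apply sumN_ext. intros. now rewrite sumN_scal_l.
Qed.

Lemma matmul_assoc N A B C i j :
  matmul N (matmul N A B) C i j = matmul N A (matmul N B C) i j.
Proof.
  unfold matmul.
  rewrite (sumN_ext _ _ (fun k => sumN N (fun l => A i l * B l k * C k j)))
    by (intros; now rewrite <- sumN_scal_r).
  rewrite sumN_exchange. apply sumN_ext. intros l _.
  rewrite <- sumN_scal_l. apply sumN_ext. intros; ring.
Qed.

Lemma matpow_add N Q m n i j : (j < N)%nat ->
  matpow N Q (m + n) i j = matmul N (matpow N Q m) (matpow N Q n) i j.
Proof.
  revert i j. induction n; intros i j Hj.
  - rewrite Nat.add_0_r. symmetry. exact (sumN_kron_r N j (matpow N Q m i) Hj).
  - rewrite Nat.add_succ_r. simpl. rewrite <- matmul_assoc. unfold matmul at 1 2.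
    apply sumN_ext. intros l Hl. now rewrite IHn.
Qed.

Lemma matpow_1 N Q i j : (i < N)%nat -> matpow N Q 1 i j = Q i j.
Proof. intros Hi. exact (sumN_kron_l N i (fun l => Q l j) Hi). Qed.

Lemma matpow_2 N Q i j : (i < N)%nat -> matpow N Q 2 i j = sumN N (fun l => Q i l * Q l j).
Proof.
  intros Hi. change (sumN N (fun l => matpow N Q 1 i l * Q l j) = sumN N (fun l => Q i l * Q l j)).
  apply sumN_ext. intros. now rewrite matpow_1.
Qed.

Definition is_generator N (Q : nat -> nat -> R) :=
  (forall i j, (i < N)%nat -> (j < N)%nat -> i <> j -> 0 <= Q i j) /\
  (forall i, (i < N)%nat -> sumN N (Q i) = 0).

Lemma generator_of_InQ N D Q :
  (forall i q, (i < N)%nat -> D i q -> InE N i q) -> InQ N D Q -> is_generator N Q.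
Proof.
  intros HD [HQ _]. split.
  - intros i j Hi Hj Hij. destruct (HD i (Q i) Hi (HQ i Hi)) as [Hoff _]. now apply Hoff.
  - intros i Hi. destruct (HD i (Q i) Hi (HQ i Hi)) as [_ [Hdiag _]].
    rewrite (sumN_split_at N i) by exact Hi. lra.
Qed.

Lemma matpow_rowsum N Q k i : is_generator N Q -> (i < N)%nat ->
  sumN N (fun j => matpow N Q k i j) = if Nat.eq_dec k 0 then 1 else 0.
Proof.
  intros [_ Hrow] Hi. destruct k as [|k]; simpl.
  - rewrite (sumN_ext _ _ (fun j => kron i j * 1)) by (intros; unfold kron; ring).
    now apply sumN_kron_l.
  - unfold matmul. rewrite sumN_exchange.
    rewrite (sumN_ext _ _ (fun _ => 0)) by
      (intros l Hl; rewrite sumN_scal_l, Hrow by exact Hl; ring).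
    apply sumN_zero.
Qed.

Definition mx_bound N (Q : nat -> nat -> R) := 1 + sumN N (fun l => sumN N (fun j => Rabs (Q l j))).

Lemma mx_bound_ge1 N Q : 1 <= mx_bound N Q.
Proof.
  unfold mx_bound.
  assert (0 <= sumN N (fun l => sumN N (fun j => Rabs (Q l j)))); [|lra].
  apply sumN_ge0; intros; apply sumN_ge0; intros; apply Rabs_pos.
Qed.

Lemma mx_bound_col N Q j : (j < N)%nat -> sumN N (fun l => Rabs (Q l j)) <= mx_bound N Q - 1.
Proof.
  intros Hj. unfold mx_bound. ring_simplify. apply sumN_le. intros l Hl.
  apply (sumN_ge_term N (fun j => Rabs (Q l j))); auto. intros; apply Rabs_pos.
Qed.

Lemma mx_bound_entry N Q i j : (i < N)%nat -> (j < N)%nat -> Rabs (Q i j) <= mx_bound N Q.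
Proof.
  intros Hi Hj. pose proof (mx_bound_col N Q j Hj).
  pose proof (sumN_ge_term N (fun l => Rabs (Q l j)) i (fun _ _ => Rabs_pos _) Hi). simpl in *. lra.
Qed.

Lemma matpow_bound N Q k i j : (j < N)%nat -> Rabs (matpow N Q k i j) <= mx_bound N Q ^ k.
Proof.
  revert i j. induction k; intros i j Hj; simpl.
  - destruct (Nat.eq_dec i j); rewrite ?Rabs_R1, ?Rabs_R0; lra.
  - set (K := mx_bound N Q). unfold matmul. eapply Rle_trans; [apply sumN_abs|].
    eapply Rle_trans. apply (sumN_le _ _ (fun l => K ^ k * Rabs (Q l j))).
    { intros l Hl. rewrite Rabs_mult. apply Rmult_le_compat_r; [apply Rabs_pos | now apply IHk]. }
    rewrite sumN_scal_l. pose proof (mx_bound_col N Q j Hj).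
    assert (0 <= K ^ k) by (apply pow_le; pose proof (mx_bound_ge1 N Q); unfold K; lra).
    apply Rmult_le_compat_l with (r := K ^ k) in H; [fold K in H; nra | assumption].
Qed.

(** Binomial coefficients by Pascal's rule, so that they vanish above the diagonal. *)
Fixpoint binom (n k : nat) : R :=
  match n, k with
  | _, O => 1
  | O, S _ => 0
  | S n', S k' => binom n' k' + binom n' (S k')
  end.

Lemma binom_gt n k : (n < k)%nat -> binom n k = 0.
Proof.
  revert k; induction n; intros k Hk; destruct k; try lia; simpl; [reflexivity|].
  rewrite !IHn by lia. ring.
Qed.

Lemma binom_C n k : (k <= n)%nat -> binom n k = Binomial.C n k.
Proof.
  revert k; induction n; intros k Hk.
  - destruct k; [|lia]. unfold Binomial.C. simpl. field.
  - destruct k as [|k].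
    + unfold Binomial.C. rewrite Nat.sub_0_r. simpl binom. change (INR (fact 0)) with 1.
      field. apply INR_fact_neq_0.
    + simpl. destruct (Nat.eq_dec k n) as [->|].
      * rewrite (binom_gt n (S n)), IHn by lia. unfold Binomial.C. rewrite !Nat.sub_diag.
        field. repeat split; apply INR_fact_neq_0.
      * rewrite !IHn by lia. apply pascal. lia.
Qed.

Lemma binom_sum_step (x : nat -> R) c p :
  sumN (S (S p)) (fun m => binom (S p) m * c ^ (S p - m) * x m) =
  sumN (S p) (fun m => binom p m * c ^ (p - m) * x (S m))
  + c * sumN (S p) (fun m => binom p m * c ^ (p - m) * x m).
Proof.
  rewrite sumN_shift. simpl binom at 1. rewrite Nat.sub_0_r.
  rewrite (sumN_ext _ _ (fun k => binom p k * c ^ (p - k) * x (S k)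
                                  + binom p (S k) * c ^ (p - k) * x (S k)))
    by (intros; simpl; ring).
  rewrite sumN_add, (sumN_shift p (fun m => binom p m * c ^ (p - m) * x m)).
  simpl (sumN (S p) (fun k => binom p (S k) * c ^ (p - k) * x (S k))).
  rewrite binom_gt, Nat.sub_0_r by lia.
  replace (binom p 0) with 1 by (destruct p; reflexivity).
  rewrite Rmult_plus_distr_l, <- sumN_scal_l.
  rewrite (sumN_ext p (fun k => c * (binom p (S k) * c ^ (p - S k) * x (S k)))
                      (fun k => binom p (S k) * c ^ (p - k) * x (S k))).
  - simpl. ring.
  - intros k Hk. replace (p - k)%nat with (S (p - S k)) by lia. simpl. ring.
Qed.

Definition mx_shift (Q : nat -> nat -> R) (c : R) : nat -> nat -> R :=
  fun a b => Q a b + c * kron a b.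

Lemma matpow_shift N Q c p i j : (i < N)%nat -> (j < N)%nat ->
  matpow N (mx_shift Q c) p i j = sumN (S p) (fun m => binom p m * c ^ (p - m) * matpow N Q m i j).
Proof.
  revert i j. induction p; intros i j Hi Hj; [simpl; ring|].
  rewrite binom_sum_step. simpl matpow at 1. unfold matmul at 1, mx_shift at 2.
  rewrite (sumN_ext _ _ (fun l => matpow N (mx_shift Q c) p i l * Q l j
                                  + c * (matpow N (mx_shift Q c) p i l * kron l j)))
    by (intros; ring).
  rewrite sumN_add, sumN_scal_l, sumN_kron_r, IHp by assumption. f_equal.
  rewrite (sumN_ext _ _ (fun l => sumN (S p) (fun m => binom p m * c ^ (p - m) * (matpow N Q m i l * Q l j)))).
  - rewrite sumN_exchange. apply sumN_ext. intros m Hm. now rewrite sumN_scal_l.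
  - intros l Hl. rewrite IHp, <- sumN_scal_r by assumption. apply sumN_ext. intros; ring.
Qed.

Lemma matpow_shift_ge0 N Q p i j : is_generator N Q -> (i < N)%nat -> (j < N)%nat ->
  0 <= matpow N (mx_shift Q (mx_bound N Q)) p i j.
Proof.
  intros [Hoff _]. revert i j. induction p; intros i j Hi Hj; simpl.
  - destruct (Nat.eq_dec i j); lra.
  - unfold matmul. apply sumN_ge0. intros l Hl. apply Rmult_le_pos; [now apply IHp|].
    unfold mx_shift, kron. destruct (Nat.eq_dec l j) as [->|Hlj].
    + pose proof (mx_bound_entry N Q j j Hj Hj). pose proof (Rle_abs (- Q j j)).
      rewrite Rabs_Ropp in *. lra.
    + pose proof (Hoff l j Hl Hj Hlj). lra.
Qed.

(** * The transition function [exp(t Q)] *)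

Lemma is_series_zero : is_series (fun _ : nat => 0) 0.
Proof.
  apply is_series_Reals. intros e He. exists O. intros n _. unfold R_dist.
  assert (sum_f_R0 (fun _ => 0) n = 0) as -> by (induction n; simpl; lra).
  rewrite Rminus_0_r, Rabs_R0. exact He.
Qed.

Lemma is_series_sumN n (a : nat -> nat -> R) x :
  (forall l, (l < n)%nat -> is_series (a l) (x l)) ->
  is_series (fun k => sumN n (fun l => a l k)) (sumN n x).
Proof.
  induction n; intros H; simpl; [apply is_series_zero|].
  apply (is_series_plus _ _ _ _ (IHn (fun l Hl => H l ltac:(lia))) (H n ltac:(lia))).
Qed.

Lemma is_series_ge0 a l : is_series a l -> (forall n, 0 <= a n) -> 0 <= l.
Proof.
  intros H Hn. rewrite <- (is_series_unique _ _ H), <- (is_series_unique _ _ is_series_zero).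
  apply Series_le; [intros; split; [lra | apply Hn] | eexists; exact H].
Qed.

Lemma is_series_le a b la lb :
  is_series a la -> is_series b lb -> (forall n, a n <= b n) -> la <= lb.
Proof.
  intros Ha Hb H. pose proof (is_series_minus _ _ _ _ Hb Ha) as Hm.
  apply is_series_ge0 in Hm; unfold plus, opp in *; simpl in *; [lra|].
  intros n. specialize (H n). lra.
Qed.

Lemma is_series_exp x : is_series (fun k => x ^ k / INR (fact k)) (exp x).
Proof.
  pose proof (is_exp_Reals x) as H. apply is_pseries_R in H.
  eapply is_series_ext; [|exact H]. intros; simpl. unfold Rdiv; ring.
Qed.

Definition expm_term N Q t i j k := t ^ k / INR (fact k) * matpow N Q k i j.

Lemma expm_term_bound N Q t i j k : (j < N)%nat ->
  Rabs (expm_term N Q t i j k) <= (Rabs t * mx_bound N Q) ^ k / INR (fact k).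
Proof.
  intros Hj. unfold expm_term, Rdiv.
  rewrite Rabs_mult, Rabs_mult, <- RPow_abs, Rabs_inv, Rpow_mult_distr.
  rewrite (Rabs_right (INR _)) by (apply Rle_ge, pos_INR).
  assert (0 < / INR (fact k)) by (apply Rinv_0_lt_compat, INR_fact_lt_0).
  assert (0 <= Rabs t ^ k) by (apply pow_le, Rabs_pos).
  pose proof (matpow_bound N Q k i j Hj).
  replace (Rabs t ^ k * mx_bound N Q ^ k * / INR (fact k))
    with (Rabs t ^ k * / INR (fact k) * mx_bound N Q ^ k) by ring.
  apply Rmult_le_compat_l; [apply Rmult_le_pos; lra | assumption].
Qed.

Lemma ex_series_abs_expm_term N Q t i j : (j < N)%nat ->
  ex_series (fun k => Rabs (expm_term N Q t i j k)).
Proof.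
  intros Hj.
  apply (@ex_series_le R_AbsRing R_CompleteNormedModule _
           (fun k => (Rabs t * mx_bound N Q) ^ k / INR (fact k))).
  - intros k. unfold norm; simpl. rewrite Rabs_Rabsolu. now apply expm_term_bound.
  - eexists; apply is_series_exp.
Qed.

Lemma is_series_trans N Q t i j : (j < N)%nat -> is_series (expm_term N Q t i j) (trans N Q t i j).
Proof.
  intros Hj. destruct (ex_series_Rabs _ (ex_series_abs_expm_term N Q t i j Hj)) as [l Hl].
  apply is_series_Reals. unfold trans.
  apply (epsilon_spec (inhabits 0)
    (fun l => infinite_sum (fun k => t ^ k / INR (fact k) * matpow N Q k i j) l)).
  exists l. now apply is_series_Reals.
Qed.

Lemma exp_binomial s t p : (s + t) ^ p / INR (fact p) =
  sum_f_R0 (fun m => s ^ m / INR (fact m) * (t ^ (p - m) / INR (fact (p - m)))) p.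
Proof.
  rewrite binomial. unfold Rdiv. rewrite Rmult_comm, scal_sum. apply sum_eq. intros m Hm.
  unfold Binomial.C.
  pose proof (INR_fact_neq_0 p). pose proof (INR_fact_neq_0 m). pose proof (INR_fact_neq_0 (p - m)).
  field. auto.
Qed.

Lemma trans_add N Q s t i j : (j < N)%nat ->
  trans N Q (s + t) i j = sumN N (fun l => trans N Q s i l * trans N Q t l j).
Proof.
  intros Hj.
  assert (Hprod : is_series
    (fun p => sumN N (fun l => sum_f_R0 (fun m => expm_term N Q s i l m * expm_term N Q t l j (p - m)) p))
    (sumN N (fun l => trans N Q s i l * trans N Q t l j))).
  { apply is_series_sumN. intros l Hl.
    apply is_series_mult; try apply is_series_trans; try apply ex_series_abs_expm_term; assumption. }
  rewrite <- (is_series_unique _ _ Hprod). symmetry. apply is_series_unique.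
  eapply is_series_ext; [|apply is_series_trans; exact Hj]. intros p. simpl.
  rewrite (sumN_ext _ _ (fun l => sumN (S p)
              (fun m => expm_term N Q s i l m * expm_term N Q t l j (p - m))))
    by (intros; symmetry; apply sumN_sum_f_R0).
  rewrite sumN_exchange. unfold expm_term.
  rewrite exp_binomial, <- sumN_sum_f_R0, <- sumN_scal_r.
  apply sumN_ext. intros m Hm.
  rewrite (sumN_ext _ _ (fun l => (s ^ m / INR (fact m) * (t ^ (p - m) / INR (fact (p - m))))
                                  * (matpow N Q m i l * matpow N Q (p - m) l j))) by (intros; ring).
  rewrite sumN_scal_l. change (sumN N (fun l => matpow N Q m i l * matpow N Q (p - m) l j))
    with (matmul N (matpow N Q m) (matpow N Q (p - m)) i j).
  rewrite <- matpow_add by exact Hj. replace (m + (p - m))%nat with p by lia. ring.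
Qed.

Lemma trans_rowsum N Q t i : is_generator N Q -> (i < N)%nat ->
  sumN N (fun j => trans N Q t i j) = 1.
Proof.
  intros G Hi.
  pose proof (is_series_sumN N (fun j => expm_term N Q t i j) (fun j => trans N Q t i j)
                (fun j Hj => is_series_trans N Q t i j Hj)) as H.
  rewrite <- (is_series_unique _ _ H). apply is_series_unique.
  apply (is_series_ext (fun k => if Nat.eq_dec k 0 then 1 else 0)).
  - intros k. unfold expm_term. rewrite sumN_scal_l, matpow_rowsum by assumption.
    destruct k; simpl; [field | ring].
  - apply is_series_Reals. intros e He. exists O. intros n _. unfold R_dist.
    replace (sum_f_R0 _ n) with 1 by (induction n; [reflexivity | rewrite tech5, <- IHn; simpl; lra]).
    rewrite Rminus_diag_eq, Rabs_R0; [exact He | reflexivity].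
Qed.

(** Uniformization: [exp(K t) * trans t = exp(t (Q + K I))], a series with nonnegative terms. *)
Lemma trans_ge0 N Q t i j : is_generator N Q -> 0 <= t -> (i < N)%nat -> (j < N)%nat ->
  0 <= trans N Q t i j.
Proof.
  intros G Ht Hi Hj. set (K := mx_bound N Q). pose proof (mx_bound_ge1 N Q).
  assert (Hfact : forall m, 0 < / INR (fact m)) by (intros; apply Rinv_0_lt_compat, INR_fact_lt_0).
  pose proof (is_series_exp (K * t)) as Hexp.
  assert (Habs : ex_series (fun m => Rabs ((K * t) ^ m / INR (fact m)))).
  { eexists. eapply is_series_ext; [|exact Hexp]. intros m. rewrite Rabs_pos_eq; [reflexivity|].
    apply Rmult_le_pos; [apply pow_le; unfold K; nra | left; apply Hfact]. }
  pose proof (is_series_mult _ _ _ _ (is_series_trans N Q t i j Hj) Hexp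
                (ex_series_abs_expm_term N Q t i j Hj) Habs) as HM.
  apply is_series_ge0 in HM; [pose proof (exp_pos (K * t)); nra|].
  intros p. rewrite <- sumN_sum_f_R0.
  rewrite (sumN_ext _ _ (fun m => t ^ p / INR (fact p) * (binom p m * K ^ (p - m) * matpow N Q m i j))).
  - rewrite sumN_scal_l, <- matpow_shift by assumption.
    apply Rmult_le_pos; [|now apply matpow_shift_ge0].
    apply Rmult_le_pos; [apply pow_le; lra | left; apply Hfact].
  - intros m Hm. unfold expm_term. rewrite binom_C by lia. unfold Binomial.C.
    replace (t ^ p) with (t ^ m * t ^ (p - m)) by (rewrite <- pow_add; f_equal; lia).
    rewrite Rpow_mult_distr.
    pose proof (INR_fact_neq_0 p). pose proof (INR_fact_neq_0 m). pose proof (INR_fact_neq_0 (p - m)).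
    field. repeat split; assumption.
Qed.

Lemma trans_abs_le1 N Q t i j : is_generator N Q -> 0 <= t -> (i < N)%nat -> (j < N)%nat ->
  Rabs (trans N Q t i j) <= 1.
Proof.
  intros G Ht Hi Hj. rewrite Rabs_pos_eq by now apply trans_ge0.
  rewrite <- (trans_rowsum N Q t i G Hi).
  apply (sumN_ge_term N (fun j => trans N Q t i j)); [intros; now apply trans_ge0 | exact Hj].
Qed.

Lemma trans_taylor2 N Q t i j : (i < N)%nat -> (j < N)%nat -> 0 <= t -> t * mx_bound N Q <= / 2 ->
  Rabs (trans N Q t i j - (kron i j + t * Q i j + t ^ 2 / 2 * matpow N Q 2 i j))
  <= 2 * (t * mx_bound N Q) ^ 3.
Proof.
  intros Hi Hj Ht HtK. set (x := t * mx_bound N Q).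
  assert (Hx : 0 <= x) by (unfold x; pose proof (mx_bound_ge1 N Q); nra).
  set (l := trans N Q t i j - sum_n (expm_term N Q t i j) 2).
  assert (Htail : is_series (fun k => expm_term N Q t i j (3 + k)) l).
  { pose proof (is_series_trans N Q t i j Hj) as T.
    replace (trans N Q t i j) with (plus l (sum_n (expm_term N Q t i j) (pred 3))) in T
      by (unfold l, plus; simpl; ring).
    apply is_series_incr_n; [lia | exact T]. }
  replace (kron i j + t * Q i j + t ^ 2 / 2 * matpow N Q 2 i j)
    with (sum_n (expm_term N Q t i j) 2)
    by (rewrite sum_n_Reals, <- (matpow_1 N Q i j Hi); simpl; unfold expm_term, kron; simpl; field).
  fold l.
  assert (Hgeom : is_series (fun k => x ^ 3 * x ^ k) (x ^ 3 * / (1 - x)))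
    by (apply (is_series_scal_l (x ^ 3) _ _ (is_series_geom x ltac:(rewrite Rabs_pos_eq; fold x in HtK; lra)))).
  assert (Hterm : forall k, Rabs (expm_term N Q t i j (3 + k)) <= x ^ 3 * x ^ k).
  { intros k. eapply Rle_trans; [apply expm_term_bound; exact Hj|].
    rewrite Rabs_pos_eq by exact Ht. fold x. rewrite <- pow_add. unfold Rdiv.
    rewrite <- (Rmult_1_r (x ^ (3 + k))) at 2. apply Rmult_le_compat_l; [now apply pow_le|].
    rewrite <- Rinv_1. apply Rinv_le_contravar; [lra | apply (le_INR 1), lt_O_fact]. }
  assert (l <= x ^ 3 * / (1 - x)).
  { apply (is_series_le _ _ _ _ Htail Hgeom). intros k.
    pose proof (Hterm k). pose proof (Rle_abs (expm_term N Q t i j (3 + k))). lra. }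
  assert (- (x ^ 3 * / (1 - x)) <= l).
  { apply (is_series_le _ _ _ _ (is_series_opp _ _ Hgeom) Htail). intros k.
    pose proof (Hterm k). pose proof (Rle_abs (- expm_term N Q t i j (3 + k))).
    rewrite Rabs_Ropp in *. change (opp (x ^ 3 * x ^ k)) with (- (x ^ 3 * x ^ k)). lra. }
  assert (x ^ 3 * / (1 - x) <= 2 * x ^ 3).
  { assert (0 <= x ^ 3) by now apply pow_le.
    assert (/ (1 - x) <= 2); [|nra].
    replace 2 with (/ / 2) by field. apply Rinv_le_contravar; fold x in HtK; lra. }
  apply Rabs_le. lra.
Qed.

Lemma trans_taylor1 N Q t i j : (i < N)%nat -> (j < N)%nat -> 0 <= t -> t * mx_bound N Q <= / 2 ->
  Rabs (trans N Q t i j - kron i j - t * Q i j) <= 2 * mx_bound N Q ^ 2 * t ^ 2.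
Proof.
  intros Hi Hj Ht HtK. pose proof (trans_taylor2 N Q t i j Hi Hj Ht HtK) as H.
  pose proof (matpow_bound N Q 2 i j Hj) as H2. pose proof (mx_bound_ge1 N Q).
  set (K := mx_bound N Q) in *. set (m2 := matpow N Q 2 i j) in *.
  replace (trans N Q t i j - kron i j - t * Q i j)
    with ((trans N Q t i j - (kron i j + t * Q i j + t ^ 2 / 2 * m2)) + t ^ 2 / 2 * m2) by ring.
  eapply Rle_trans; [apply Rabs_triang|]. rewrite Rabs_mult.
  assert (Ht2 : 0 <= t ^ 2 / 2) by (apply Rmult_le_pos; [apply pow_le|]; lra).
  rewrite (Rabs_pos_eq (t ^ 2 / 2)) by exact Ht2.
  assert (t ^ 2 / 2 * Rabs m2 <= t ^ 2 / 2 * K ^ 2) by now apply Rmult_le_compat_l.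
  assert ((t * K) ^ 3 <= (t * K) ^ 2 / 2).
  { replace ((t * K) ^ 3) with ((t * K) ^ 2 * (t * K)) by ring.
    assert (0 <= (t * K) ^ 2) by (apply pow_le; nra).
    apply Rmult_le_compat_l with (r := (t * K) ^ 2) in HtK; lra. }
  replace ((t * K) ^ 2) with (K ^ 2 * t ^ 2) in * by ring.
  assert (0 <= K ^ 2 * t ^ 2) by (apply Rmult_le_pos; apply pow2_ge_0). lra.
Qed.

Lemma trans_taylor0 N Q t i j : (i < N)%nat -> (j < N)%nat -> 0 <= t -> t * mx_bound N Q <= / 2 ->
  Rabs (trans N Q t i j - kron i j) <= 2 * mx_bound N Q * t.
Proof.
  intros Hi Hj Ht HtK. pose proof (trans_taylor1 N Q t i j Hi Hj Ht HtK).
  pose proof (mx_bound_entry N Q i j Hi Hj). pose proof (mx_bound_ge1 N Q).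
  set (K := mx_bound N Q) in *.
  replace (trans N Q t i j - kron i j) with ((trans N Q t i j - kron i j - t * Q i j) + t * Q i j) by ring.
  eapply Rle_trans; [apply Rabs_triang|]. rewrite Rabs_mult, (Rabs_pos_eq t) by exact Ht.
  assert (t * Rabs (Q i j) <= t * K) by now apply Rmult_le_compat_l.
  assert (2 * K ^ 2 * t ^ 2 <= K * t); [|lra].
  replace (2 * K ^ 2 * t ^ 2) with ((K * t) * (2 * (t * K))) by ring.
  assert (0 <= K * t) by nra. nra.
Qed.

Lemma trans_lipschitz N Q s h i j : is_generator N Q -> (i < N)%nat -> (j < N)%nat ->
  0 <= s -> 0 <= h -> h * mx_bound N Q <= / 2 ->
  Rabs (trans N Q (s + h) i j - trans N Q s i j) <= INR N * (2 * mx_bound N Q * h).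
Proof.
  intros G Hi Hj Hs Hh HhK.
  rewrite trans_add, <- (sumN_kron_r N j (fun l => trans N Q s i l)), <- sumN_sub, <- sumN_const
    by exact Hj.
  eapply Rle_trans; [apply sumN_abs|]. apply sumN_le. intros l Hl.
  replace (trans N Q s i l * trans N Q h l j - trans N Q s i l * kron l j)
    with (trans N Q s i l * (trans N Q h l j - kron l j)) by ring.
  rewrite Rabs_mult. pose proof (trans_abs_le1 N Q s i l G Hs Hi Hl).
  pose proof (trans_taylor0 N Q h l j Hl Hj Hh HhK).
  pose proof (Rabs_pos (trans N Q h l j - kron l j)). pose proof (Rabs_pos (trans N Q s i l)). nra.
Qed.

(** * Continuity and integrals on [[0, oo)] *)

Definition cont_nonneg (g : R -> R) := forall x, continuity_pt (fun t => g (Rmax 0 t)) x.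

Lemma Rmax0_lipschitz x y : Rabs (Rmax 0 y - Rmax 0 x) <= Rabs (y - x).
Proof. unfold Rmax. destruct (Rle_dec 0 y), (Rle_dec 0 x); unfold Rabs; repeat destruct Rcase_abs; lra. Qed.

Lemma cont_nonnegI g :
  (forall x, 0 <= x -> forall e, e > 0 -> exists d, d > 0 /\
     forall y, 0 <= y -> Rabs (y - x) < d -> Rabs (g y - g x) < e) -> cont_nonneg g.
Proof.
  intros H x0 e He. destruct (H _ (Rmax_l 0 x0) e He) as [d [Hd H1]].
  exists d. split; [exact Hd|]. intros y [_ Hy]. simpl in *. unfold R_dist in *.
  apply H1; [apply Rmax_l | eapply Rle_lt_trans; [apply Rmax0_lipschitz | exact Hy]].
Qed.

Lemma cont_nonnegE g : cont_nonneg g -> forall x, 0 <= x -> forall e, e > 0 -> exists d, d > 0 /\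
  forall y, 0 <= y -> Rabs (y - x) < d -> Rabs (g y - g x) < e.
Proof.
  intros H x Hx e He. destruct (H x e He) as [d [Hd H1]]. exists d. split; [exact Hd|].
  intros y Hy Hyx. destruct (Req_dec y x) as [->|Hne]; [rewrite Rminus_diag_eq, Rabs_R0; auto|].
  specialize (H1 y). simpl in H1. unfold R_dist in H1. rewrite !Rmax_right in H1 by assumption.
  apply H1. split; [split; [exact I | auto] | exact Hyx].
Qed.

Lemma cont_nonneg_const c : cont_nonneg (fun _ => c).
Proof. intros x. now apply continuity_pt_const. Qed.

Lemma cont_nonneg_plus g h : cont_nonneg g -> cont_nonneg h -> cont_nonneg (fun t => g t + h t).
Proof. intros Hg Hh x. apply (continuity_pt_plus _ _ x (Hg x) (Hh x)). Qed.

Lemma cont_nonneg_minus g h : cont_nonneg g -> cont_nonneg h -> cont_nonneg (fun t => g t - h t).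
Proof. intros Hg Hh x. apply (continuity_pt_minus _ _ x (Hg x) (Hh x)). Qed.

Lemma cont_nonneg_mult g h : cont_nonneg g -> cont_nonneg h -> cont_nonneg (fun t => g t * h t).
Proof. intros Hg Hh x. apply (continuity_pt_mult _ _ x (Hg x) (Hh x)). Qed.

Lemma cont_nonneg_scal c g : cont_nonneg g -> cont_nonneg (fun t => c * g t).
Proof. intros Hg. apply cont_nonneg_mult; [apply cont_nonneg_const | exact Hg]. Qed.

Lemma cont_nonneg_abs g : cont_nonneg g -> cont_nonneg (fun t => Rabs (g t)).
Proof. intros Hg x. apply (continuity_pt_comp (fun t => g (Rmax 0 t)) Rabs x (Hg x)), Rcontinuity_abs. Qed.

Lemma cont_nonneg_sumN n (g : nat -> R -> R) :
  (forall l, (l < n)%nat -> cont_nonneg (g l)) -> cont_nonneg (fun t => sumN n (fun l => g l t)).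
Proof.
  induction n; intros H; simpl; [apply cont_nonneg_const|].
  apply cont_nonneg_plus; [apply IHn; intros; apply H | apply H]; lia.
Qed.

Lemma cont_nonneg_shift g c : 0 <= c -> cont_nonneg g -> cont_nonneg (fun t => g (t + c)).
Proof.
  intros Hc Hg. apply cont_nonnegI. intros x Hx e He.
  destruct (cont_nonnegE g Hg (x + c) ltac:(lra) e He) as [d [Hd H]].
  exists d. split; [exact Hd|]. intros y Hy Hyx. apply H; [lra|].
  now replace (y + c - (x + c)) with (y - x) by ring.
Qed.

Lemma ex_RInt_cont_nonneg g a b : cont_nonneg g -> 0 <= a -> a <= b -> ex_RInt g a b.
Proof.
  intros H Ha Hab. apply (ex_RInt_ext (fun t => g (Rmax 0 t))).
  - intros x Hx. rewrite Rmin_left, Rmax_right in Hx by assumption. rewrite Rmax_right; [reflexivity | lra].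
  - apply (@ex_RInt_continuous R_CompleteNormedModule). intros x _.
    apply continuity_pt_filterlim, H.
Qed.

Lemma trans_cont_nonneg N Q i j : is_generator N Q -> (i < N)%nat -> (j < N)%nat ->
  cont_nonneg (fun t => trans N Q t i j).
Proof.
  intros G Hi Hj. apply cont_nonnegI. intros x Hx e He.
  set (K := mx_bound N Q). pose proof (mx_bound_ge1 N Q) as HK. fold K in HK.
  pose proof (pos_INR N) as HN.
  set (d := Rmin (/ (2 * K)) (e / (INR N * 2 * K + 1))).
  assert (Hd1 : d <= / (2 * K)) by apply Rmin_l.
  assert (Hd2 : d <= e / (INR N * 2 * K + 1)) by apply Rmin_r.
  assert (Hd : d > 0) by (apply Rmin_pos; [apply Rinv_0_lt_compat | apply Rdiv_lt_0_compat]; nra).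
  assert (Hsmall : INR N * 2 * K * d < e).
  { assert (e / (INR N * 2 * K + 1) * (INR N * 2 * K + 1) = e) by (field; nra).
    assert (INR N * 2 * K * d <= INR N * 2 * K * (e / (INR N * 2 * K + 1)))
      by (apply Rmult_le_compat_l; nra).
    assert (0 < e / (INR N * 2 * K + 1)) by (apply Rdiv_lt_0_compat; nra). nra. }
  assert (HdK : d * K <= / 2) by (assert (/ (2 * K) * K = / 2) by (field; lra); nra).
  assert (Hstep : forall a h, 0 <= a -> 0 <= h < d ->
            Rabs (trans N Q (a + h) i j - trans N Q a i j) < e).
  { intros a h Ha Hh. eapply Rle_lt_trans; [apply trans_lipschitz; auto; fold K; nra|]. fold K. nra. }
  exists d. split; [exact Hd|]. intros y Hy Hyx. destruct (Rle_dec x y).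
  - replace y with (x + (y - x)) by ring. apply Hstep; [exact Hx|].
    rewrite Rabs_pos_eq in Hyx; lra.
  - rewrite Rabs_minus_sym. replace x with (y + (x - y)) by ring. apply Hstep; [exact Hy|].
    rewrite Rabs_minus_sym, Rabs_pos_eq in Hyx; lra.
Qed.

Lemma RInt_zero a b : RInt (fun _ => 0) a b = 0.
Proof. rewrite RInt_const. unfold scal; simpl; unfold mult; simpl. ring. Qed.

Lemma RInt_abs_le f g a b : a <= b -> ex_RInt f a b -> ex_RInt g a b ->
  (forall x, a < x < b -> Rabs (f x) <= g x) -> Rabs (RInt f a b) <= RInt g a b.
Proof.
  intros Hab Hf Hg H. eapply Rle_trans; [apply abs_RInt_le; assumption|].
  apply RInt_le; auto. apply (ex_RInt_norm f a b Hf).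
Qed.

Lemma RInt_abs_le_const f a b M : a <= b -> ex_RInt f a b ->
  (forall x, a < x < b -> Rabs (f x) <= M) -> Rabs (RInt f a b) <= (b - a) * M.
Proof.
  intros. eapply Rle_trans; [apply (RInt_abs_le f (fun _ => M)); auto; apply ex_RInt_const|].
  rewrite RInt_const. unfold scal; simpl; unfold mult; simpl. lra.
Qed.

Lemma ex_RInt_sumN n (g : nat -> R -> R) a b : (forall l, (l < n)%nat -> ex_RInt (g l) a b) ->
  ex_RInt (fun t => sumN n (fun l => g l t)) a b.
Proof.
  induction n; intros H; simpl; [apply ex_RInt_const|].
  apply (ex_RInt_plus (fun t => sumN n (fun l => g l t)) (g n)); [apply IHn; intros; apply H | apply H]; lia.
Qed.

Lemma RInt_sumN n (g : nat -> R -> R) a b : (forall l, (l < n)%nat -> ex_RInt (g l) a b) ->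
  RInt (fun t => sumN n (fun l => g l t)) a b = sumN n (fun l => RInt (g l) a b).
Proof.
  induction n; intros H; simpl; [apply RInt_zero|].
  rewrite (RInt_plus (fun t => sumN n (fun l => g l t)) (g n)), IHn; [reflexivity| |apply ex_RInt_sumN|];
    intros; apply H; lia.
Qed.

Lemma RInt_shift (g : R -> R) c a b : ex_RInt g (a + c) (b + c) ->
  RInt (fun s => g (s + c)) a b = RInt g (a + c) (b + c).
Proof.
  intros H. pose proof (RInt_comp_lin g 1 c a b) as E. rewrite !Rmult_1_l in E.
  rewrite <- E by exact H. apply RInt_ext. intros.
  unfold scal; simpl; unfold mult; simpl. now rewrite !Rmult_1_l.
Qed.

Lemma ex_RInt_shift (g : R -> R) c a b : ex_RInt g (a + c) (b + c) -> ex_RInt (fun s => g (s + c)) a b.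
Proof.
  intros H. pose proof (ex_RInt_comp_lin g 1 c a b) as E. rewrite !Rmult_1_l in E.
  apply (ex_RInt_ext (fun y => scal 1 (g (1 * y + c)))); [|now apply E].
  intros. unfold scal; simpl; unfold mult; simpl. now rewrite !Rmult_1_l.
Qed.

Definition is_improper (g : R -> R) (l : R) :=
  (forall T, 0 <= T -> ex_RInt g 0 T) /\
  (forall e, e > 0 -> exists T0, forall T, T0 <= T -> Rabs (RInt g 0 T - l) < e).

Lemma improper_int0_unique g l1 l2 : improper_int0 g l1 -> improper_int0 g l2 -> l1 = l2.
Proof.
  intros [Hex H1] [_ H2]. destruct (Req_dec l1 l2) as [|Hne]; [assumption|]. exfalso.
  assert (He : Rabs (l1 - l2) / 2 > 0) by (apply Rdiv_lt_0_compat; [apply Rabs_pos_lt|]; lra).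
  destruct (H1 _ He) as [T1 A], (H2 _ He) as [T2 B].
  set (T := Rmax 0 (Rmax T1 T2)).
  assert (T1 <= T) by (unfold T; eapply Rle_trans; [apply Rmax_l | apply Rmax_r]).
  assert (T2 <= T) by (unfold T; eapply Rle_trans; [apply Rmax_r | apply Rmax_r]).
  destruct (Hex T (Rmax_l _ _)) as [pr].
  specialize (A T pr ltac:(assumption)). specialize (B T pr ltac:(assumption)).
  pose proof (Rabs_triang (- (RiemannInt pr - l1)) (RiemannInt pr - l2)).
  rewrite Rabs_Ropp in *. replace (- (RiemannInt pr - l1) + (RiemannInt pr - l2)) with (l1 - l2) in * by ring.
  lra.
Qed.

Lemma Int0inf_is_improper g l : is_improper g l -> Int0inf g = l.
Proof.
  intros [H1 H2].
  assert (Hl : improper_int0 g l).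
  { split; [intros T HT; constructor; apply ex_RInt_Reals_0, H1, HT|].
    intros e He. destruct (H2 e He) as [T0 A]. exists T0. intros T pr HT. rewrite <- RInt_Reals. auto. }
  apply (improper_int0_unique g); [|exact Hl].
  apply (epsilon_spec (inhabits 0) (improper_int0 g)). now exists l.
Qed.

Lemma is_improper_ext g h l : (forall t, 0 < t -> g t = h t) -> is_improper g l -> is_improper h l.
Proof.
  intros E [H1 H2].
  assert (Eint : forall T, 0 <= T -> forall x, Rmin 0 T < x < Rmax 0 T -> g x = h x)
    by (intros T HT x Hx; rewrite Rmin_left in Hx by exact HT; apply E; lra).
  split.
  - intros T HT. apply (ex_RInt_ext g); [apply Eint | apply H1]; exact HT.
  - intros e He. destruct (H2 e He) as [T0 A]. exists (Rmax 0 T0). intros T HT.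
    assert (0 <= T) by (eapply Rle_trans; [apply Rmax_l | exact HT]).
    rewrite <- (RInt_ext g) by now apply Eint.
    apply A. eapply Rle_trans; [apply Rmax_r | exact HT].
Qed.

Lemma is_improper_plus g h a b : is_improper g a -> is_improper h b -> is_improper (fun t => g t + h t) (a + b).
Proof.
  intros [G1 G2] [H1 H2]. split; [intros; apply (ex_RInt_plus g h); auto|].
  intros e He. destruct (G2 (e / 2) ltac:(lra)) as [T1 A], (H2 (e / 2) ltac:(lra)) as [T2 B].
  exists (Rmax 0 (Rmax T1 T2)). intros T HT.
  pose proof (Rmax_l 0 (Rmax T1 T2)). pose proof (Rmax_r 0 (Rmax T1 T2)).
  pose proof (Rmax_l T1 T2). pose proof (Rmax_r T1 T2).
  rewrite (RInt_plus g h) by (apply G1 || apply H1; lra).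
  change (plus (RInt g 0 T) (RInt h 0 T)) with (RInt g 0 T + RInt h 0 T).
  specialize (A T ltac:(lra)). specialize (B T ltac:(lra)).
  replace (RInt g 0 T + RInt h 0 T - (a + b)) with ((RInt g 0 T - a) + (RInt h 0 T - b)) by ring.
  eapply Rle_lt_trans; [apply Rabs_triang | lra].
Qed.

Lemma is_improper_scal c g a : is_improper g a -> is_improper (fun t => c * g t) (c * a).
Proof.
  intros [G1 G2]. split; [intros; apply (ex_RInt_scal g); auto|].
  intros e He. pose proof (Rabs_pos c).
  destruct (G2 (e / (Rabs c + 1))) as [T1 A]; [apply Rdiv_lt_0_compat; lra|].
  exists (Rmax 0 T1). intros T HT. pose proof (Rmax_l 0 T1). pose proof (Rmax_r 0 T1).
  rewrite (RInt_scal g) by (apply G1; lra).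
  unfold scal; simpl; unfold mult; simpl.
  replace (c * RInt g 0 T - c * a) with (c * (RInt g 0 T - a)) by ring.
  rewrite Rabs_mult. specialize (A T ltac:(lra)).
  assert (e / (Rabs c + 1) * (Rabs c + 1) = e) by (field; lra).
  assert (Rabs c * Rabs (RInt g 0 T - a) <= Rabs c * (e / (Rabs c + 1))) by (apply Rmult_le_compat_l; lra).
  assert (0 < e / (Rabs c + 1)) by (apply Rdiv_lt_0_compat; lra). nra.
Qed.

Lemma is_improper_sumN n (g : nat -> R -> R) (a : nat -> R) :
  (forall l, (l < n)%nat -> is_improper (g l) (a l)) ->
  is_improper (fun t => sumN n (fun l => g l t)) (sumN n a).
Proof.
  induction n; intros H; simpl.
  - split; [intros; apply ex_RInt_const|]. intros e He. exists 0. intros.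
    rewrite RInt_zero, Rminus_0_r, Rabs_R0. lra.
  - apply is_improper_plus; [apply IHn; intros; apply H | apply H]; lia.
Qed.

Lemma is_improper_shift (g : R -> R) c m : 0 <= c -> ex_RInt g 0 c ->
  is_improper (fun s => g (s + c)) m -> is_improper g (RInt g 0 c + m).
Proof.
  intros Hc Hg [H1 H2].
  assert (Hex : forall T, c <= T -> ex_RInt g c T).
  { intros T HT. specialize (H1 (T - c) ltac:(lra)).
    pose proof (ex_RInt_shift (fun s => g (s + c)) (- c) c T) as E.
    replace (c + - c) with 0 in E by ring. replace (T + - c) with (T - c) in E by ring.
    refine (ex_RInt_ext _ _ _ _ _ (E H1)). intros x _. f_equal. ring. }
  split.
  - intros T HT. destruct (Rle_dec T c).
    + apply (ex_RInt_Chasles_1 g 0 T c); auto.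
    + apply (ex_RInt_Chasles g 0 c T); auto. apply Hex. lra.
  - intros e He. destruct (H2 e He) as [T0 A]. exists (Rmax c (T0 + c)). intros T HT.
    pose proof (Rmax_l c (T0 + c)). pose proof (Rmax_r c (T0 + c)).
    rewrite <- (RInt_Chasles g 0 c T) by (auto; apply Hex; lra).
    unfold plus; simpl.
    replace (RInt g c T) with (RInt (fun s => g (s + c)) 0 (T - c))
      by (rewrite RInt_shift; replace (0 + c) with c by ring; replace (T - c + c) with T by ring;
          [reflexivity | apply Hex; lra]).
    replace (RInt g 0 c + RInt (fun s => g (s + c)) 0 (T - c) - (RInt g 0 c + m))
      with (RInt (fun s => g (s + c)) 0 (T - c) - m) by ring.
    apply A. lra.
Qed.

Lemma is_improper_abs_le g l B T1 : is_improper g l ->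
  (forall T, T1 <= T -> Rabs (RInt g 0 T) <= B) -> Rabs l <= B.
Proof.
  intros [_ H] HB. destruct (Rle_dec (Rabs l) B) as [|Hn]; [assumption|]. exfalso.
  destruct (H (Rabs l - B) ltac:(lra)) as [T0 A].
  specialize (A (Rmax T0 T1) (Rmax_l _ _)). specialize (HB (Rmax T0 T1) (Rmax_r _ _)).
  pose proof (Rabs_triang (RInt g 0 (Rmax T0 T1)) (- (RInt g 0 (Rmax T0 T1) - l))).
  rewrite Rabs_Ropp in *. replace (RInt g 0 (Rmax T0 T1) + - (RInt g 0 (Rmax T0 T1) - l)) with l in * by ring.
  lra.
Qed.

Lemma bounded_nondecreasing_cauchy (V : R -> R) M :
  (forall T T', 0 <= T -> T <= T' -> V T <= V T') -> (forall T, 0 <= T -> V T <= M) ->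
  forall e, e > 0 -> exists T1, 0 <= T1 /\ forall T T', T1 <= T -> T <= T' -> V T' - V T < e.
Proof.
  intros Hmono HM e He.
  destruct (completeness (fun x => exists T, 0 <= T /\ x = V T)) as [S [HS1 HS2]].
  { exists M. intros x [T [HT ->]]. now apply HM. }
  { exists (V 0), 0. split; [lra | reflexivity]. }
  destruct (Classical_Prop.classic (exists T1, 0 <= T1 /\ V T1 > S - e)) as [[T1 [HT1 HV]]|Hn].
  - exists T1. split; [exact HT1|]. intros T T' HT HTT.
    assert (V T' <= S) by (apply HS1; exists T'; split; [lra | reflexivity]).
    pose proof (Hmono T1 T HT1 HT). lra.
  - exfalso. assert (S <= S - e); [|lra]. apply HS2. intros x [T [HT ->]].
    destruct (Rle_dec (V T) (S - e)) as [|Hgt]; [assumption|].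
    exfalso. apply Hn. exists T. split; [exact HT | lra].
Qed.

Lemma cauchy_cvg_at_infinity (I : R -> R) :
  (forall e, e > 0 -> exists T1, 0 <= T1 /\ forall T T', T1 <= T -> T <= T' -> Rabs (I T' - I T) < e) ->
  exists l, forall e, e > 0 -> exists T0, forall T, T0 <= T -> Rabs (I T - l) < e.
Proof.
  intros HC. set (u := fun n : nat => I (INR n)).
  assert (Hu : Cauchy_crit u).
  { intros e He. destruct (HC e He) as [T1 [HT1 H]]. destruct (INR_unbounded T1) as [N0 HN0].
    exists N0. intros n m Hn Hm. unfold R_dist, u.
    assert (INR N0 <= INR n) by (apply le_INR; lia). assert (INR N0 <= INR m) by (apply le_INR; lia).
    destruct (Rle_dec (INR n) (INR m)).
    - rewrite Rabs_minus_sym. apply H; lra.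
    - apply H; lra. }
  destruct (Rcomplete.R_complete u Hu) as [l Hl]. exists l. intros e He.
  destruct (HC (e / 2) ltac:(lra)) as [T1 [HT1 H]]. destruct (Hl (e / 2) ltac:(lra)) as [N1 HN1].
  exists T1. intros T HT. destruct (INR_unbounded (Rmax T (INR N1))) as [n Hn].
  pose proof (Rmax_l T (INR N1)). pose proof (Rmax_r T (INR N1)).
  specialize (HN1 n ltac:(apply INR_le; lra)). unfold R_dist, u in HN1.
  specialize (H T (INR n) HT ltac:(lra)).
  replace (I T - l) with (- (I (INR n) - I T) + (I (INR n) - l)) by ring.
  eapply Rle_lt_trans; [apply Rabs_triang|]. rewrite Rabs_Ropp. lra.
Qed.

Lemma is_improper_dominated (g d : R -> R) :
  (forall T, 0 <= T -> ex_RInt g 0 T) -> (forall T, 0 <= T -> ex_RInt d 0 T) ->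
  (forall t, 0 <= t -> Rabs (g t) <= d t) -> (exists M, forall T, 0 <= T -> RInt d 0 T <= M) ->
  exists l, is_improper g l.
Proof.
  intros Hg Hd Hgd [M HM].
  assert (Hpiece : forall (h : R -> R) T T', (forall T, 0 <= T -> ex_RInt h 0 T) -> 0 <= T -> T <= T' ->
            RInt h 0 T' - RInt h 0 T = RInt h T T' /\ ex_RInt h T T').
  { intros h T T' Hh HT HTT.
    assert (ex_RInt h 0 T) by (apply (ex_RInt_Chasles_1 h 0 T T'); [lra | apply Hh; lra]).
    assert (ex_RInt h T T') by (apply (ex_RInt_Chasles_2 h 0 T T'); [lra | apply Hh; lra]).
    split; [|assumption]. rewrite <- (RInt_Chasles h 0 T T') by assumption.
    unfold plus; simpl. ring. }
  assert (Hcau : forall T T', 0 <= T -> T <= T' ->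
            Rabs (RInt g 0 T' - RInt g 0 T) <= RInt d 0 T' - RInt d 0 T).
  { intros T T' HT HTT. destruct (Hpiece g T T' Hg HT HTT) as [-> Xg].
    destruct (Hpiece d T T' Hd HT HTT) as [-> Xd].
    apply RInt_abs_le; auto. intros x Hx. apply Hgd. lra. }
  assert (Hmono : forall T T', 0 <= T -> T <= T' -> RInt d 0 T <= RInt d 0 T').
  { intros T T' HT HTT. pose proof (Hcau T T' HT HTT).
    pose proof (Rabs_pos (RInt g 0 T' - RInt g 0 T)). lra. }
  destruct (cauchy_cvg_at_infinity (fun T => RInt g 0 T)) as [l Hl].
  { intros e He. destruct (bounded_nondecreasing_cauchy _ M Hmono HM e He) as [T1 [HT1 H]].
    exists T1. split; [exact HT1|]. intros T T' HT HTT.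
    eapply Rle_lt_trans; [apply Hcau; lra | now apply H]. }
  exists l. split; assumption.
Qed.

Definition C1_nonneg (phi psi : R -> R) :=
  (forall t, 0 <= t -> forall e, e > 0 -> exists d, d > 0 /\
     forall h, h <> 0 -> Rabs h < d -> 0 <= t + h -> Rabs ((phi (t + h) - phi t) / h - psi t) < e) /\
  (forall t, 0 <= t -> forall e, e > 0 -> exists d, d > 0 /\
     forall s, 0 <= s -> Rabs (s - t) < d -> Rabs (psi s - psi t) < e).

Section C1Functions.

Variables phi psi : R -> R.
Hypothesis Hphi : C1_nonneg phi psi.

Lemma C1_cont_deriv : cont_nonneg psi.
Proof. apply cont_nonnegI, (proj2 Hphi). Qed.

Lemma C1_cont : cont_nonneg phi.
Proof.
  apply cont_nonnegI. intros x Hx e He.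
  destruct (proj1 Hphi x Hx 1 Rlt_0_1) as [d [Hd A]].
  set (c := Rabs (psi x) + 1). assert (Hc : c > 0) by (unfold c; pose proof (Rabs_pos (psi x)); lra).
  exists (Rmin d (e / c)). split; [apply Rmin_pos; [|apply Rdiv_lt_0_compat]; lra|].
  intros y Hy Hyx. destruct (Req_dec y x) as [->|Hne]; [rewrite Rminus_diag_eq, Rabs_R0; auto|].
  assert (Hd1 : Rabs (y - x) < d) by (eapply Rlt_le_trans; [exact Hyx | apply Rmin_l]).
  assert (Hd2 : Rabs (y - x) < e / c) by (eapply Rlt_le_trans; [exact Hyx | apply Rmin_r]).
  specialize (A (y - x) ltac:(lra) Hd1 ltac:(lra)). replace (x + (y - x)) with y in A by ring.
  replace (phi y - phi x) with (((phi y - phi x) / (y - x) - psi x) * (y - x) + psi x * (y - x))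
    by (field; lra).
  eapply Rle_lt_trans; [apply Rabs_triang|]. rewrite !Rabs_mult.
  assert (Rabs ((phi y - phi x) / (y - x) - psi x) * Rabs (y - x) <= 1 * Rabs (y - x))
    by (apply Rmult_le_compat_r; [apply Rabs_pos | lra]).
  assert (c * Rabs (y - x) < e)
    by (apply Rmult_lt_compat_l with (r := c) in Hd2; [|exact Hc]; field_simplify in Hd2; lra).
  unfold c in *. lra.
Qed.

Lemma C1_derivable u : 0 < u -> derivable_pt_lim (fun t => phi (Rmax 0 t)) u (psi u).
Proof.
  intros Hu e He. destruct (proj1 Hphi u ltac:(lra) e He) as [d [Hd A]].
  exists (mkposreal (Rmin d u) (Rmin_pos _ _ Hd Hu)). intros h Hh Hhd. simpl in Hhd.
  assert (Rabs h < d) by (eapply Rlt_le_trans; [exact Hhd | apply Rmin_l]).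
  assert (Rabs h < u) by (eapply Rlt_le_trans; [exact Hhd | apply Rmin_r]).
  assert (0 <= u + h) by (pose proof (Rle_abs (- h)); rewrite Rabs_Ropp in *; lra).
  rewrite !Rmax_right by lra. now apply A.
Qed.

Lemma C1_mean_value s eps : 0 <= s -> 0 < eps -> exists c, s <= c <= s + eps /\
  phi (s + eps) - phi s - eps * psi s = eps * (psi c - psi s).
Proof.
  intros Hs He. set (chi := fun u => phi (Rmax 0 u) - u * psi s).
  destruct (MVT_gen chi s (s + eps) (fun u => psi u - psi s)) as [c [Hc E]].
  - intros x Hx. rewrite Rmin_left, Rmax_right in Hx by lra. apply is_derive_Reals.
    apply (derivable_pt_lim_minus (fun t => phi (Rmax 0 t)) (fun u => u * psi s));
      [apply C1_derivable; lra|].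
    apply is_derive_Reals. auto_derive; [exact I | ring].
  - intros x _. apply (continuity_pt_minus (fun t => phi (Rmax 0 t)) (fun u => u * psi s));
      [apply C1_cont | reg].
  - rewrite Rmin_left, Rmax_right in Hc by lra. exists c. split; [exact Hc|].
    unfold chi in E. rewrite !Rmax_right in E by lra. replace (s + eps - s) with eps in E by ring. lra.
Qed.

End C1Functions.

(** * Asymptotics as [e -> 0+] *)

Definition near0 (P : R -> Prop) := exists dl, dl > 0 /\ forall e, 0 < e < dl -> P e.

Lemma near0_mono (P P' : R -> Prop) : (forall e, 0 < e -> P e -> P' e) -> near0 P -> near0 P'.
Proof. intros H [dl [Hdl A]]. exists dl. split; [exact Hdl|]. intros e He. apply H, A; lra. Qed.

Lemma near0_lt c : c > 0 -> near0 (fun e => e < c).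
Proof. intros Hc. exists c. split; [exact Hc | intros; lra]. Qed.

Lemma near0_and (P P' : R -> Prop) : near0 P -> near0 P' -> near0 (fun e => P e /\ P' e).
Proof.
  intros [d1 [Hd1 A]] [d2 [Hd2 B]]. exists (Rmin d1 d2). split; [now apply Rmin_pos|].
  intros e He. pose proof (Rmin_l d1 d2). pose proof (Rmin_r d1 d2). split; [apply A | apply B]; lra.
Qed.

Lemma near0_forall_lt n (P : nat -> R -> Prop) :
  (forall j, (j < n)%nat -> near0 (P j)) -> near0 (fun e => forall j, (j < n)%nat -> P j e).
Proof.
  induction n; intros H; [exists 1; split; [lra | intros; lia]|].
  apply (near0_mono (fun e => (forall j, (j < n)%nat -> P j e) /\ P n e)).
  - intros e _ [A B] j Hj. destruct (Nat.eq_dec j n) as [->|]; [exact B | apply A; lia].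
  - apply near0_and; [apply IHn; intros; apply H | apply H]; lia.
Qed.

Lemma near0_exists_below (P : R -> Prop) : near0 P -> forall e0, e0 > 0 -> exists e, 0 < e <= e0 /\ P e.
Proof.
  intros [dl [Hdl A]] e0 He0. exists (Rmin e0 (dl / 2)).
  pose proof (Rmin_l e0 (dl / 2)). pose proof (Rmin_r e0 (dl / 2)).
  assert (0 < Rmin e0 (dl / 2)) by (apply Rmin_pos; lra).
  split; [lra | apply A; lra].
Qed.

Lemma near0_closed (P : R -> Prop) : near0 P -> exists e, e > 0 /\ forall e', 0 < e' <= e -> P e'.
Proof. intros [dl [Hdl A]]. exists (dl / 2). split; [lra|]. intros e' He'. apply A. lra. Qed.

Definition little_o (k : nat) (u : R -> R) :=
  forall eta, eta > 0 -> near0 (fun e => Rabs (u e) <= eta * e ^ k).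

Definition big_O (k : nat) (u : R -> R) := exists C, near0 (fun e => Rabs (u e) <= C * e ^ k).

Lemma little_o_ext k u v : (forall e, 0 < e -> u e = v e) -> little_o k u -> little_o k v.
Proof. intros E H eta Heta. refine (near0_mono _ _ _ (H eta Heta)). intros e He. now rewrite E. Qed.

Lemma big_O_ext k u v : (forall e, 0 < e -> u e = v e) -> big_O k u -> big_O k v.
Proof. intros E [C H]. exists C. refine (near0_mono _ _ _ H). intros e He. now rewrite E. Qed.

Lemma little_o_plus k u v : little_o k u -> little_o k v -> little_o k (fun e => u e + v e).
Proof.
  intros Hu Hv eta Heta.
  refine (near0_mono _ _ _ (near0_and _ _ (Hu (eta / 2) ltac:(lra)) (Hv (eta / 2) ltac:(lra)))).
  intros e _ [A B]. eapply Rle_trans; [apply Rabs_triang | lra].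
Qed.

Lemma big_O_plus k u v : big_O k u -> big_O k v -> big_O k (fun e => u e + v e).
Proof.
  intros [C1 Hu] [C2 Hv]. exists (C1 + C2).
  refine (near0_mono _ _ _ (near0_and _ _ Hu Hv)).
  intros e _ [A B]. eapply Rle_trans; [apply Rabs_triang | lra].
Qed.

Lemma little_o_scal k c u : little_o k u -> little_o k (fun e => c * u e).
Proof.
  intros Hu eta Heta. pose proof (Rabs_pos c).
  refine (near0_mono _ _ _ (Hu (eta / (Rabs c + 1)) ltac:(apply Rdiv_lt_0_compat; lra))).
  intros e He A. rewrite Rabs_mult. set (X := eta / (Rabs c + 1) * e ^ k) in A.
  assert (eta * e ^ k = (Rabs c + 1) * X) by (unfold X; field; lra).
  pose proof (Rabs_pos (u e)).
  assert (Rabs c * Rabs (u e) <= Rabs c * X) by (apply Rmult_le_compat_l; lra). nra.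
Qed.

Lemma big_O_scal k c u : big_O k u -> big_O k (fun e => c * u e).
Proof.
  intros [C H]. exists (Rabs c * C). refine (near0_mono _ _ _ H). intros e _ A.
  rewrite Rabs_mult, Rmult_assoc. apply Rmult_le_compat_l; [apply Rabs_pos | exact A].
Qed.

Lemma little_o_sumN k n (u : nat -> R -> R) :
  (forall l, (l < n)%nat -> little_o k (u l)) -> little_o k (fun e => sumN n (fun l => u l e)).
Proof.
  induction n; intros H; simpl.
  - intros eta Heta. exists 1. split; [lra|]. intros e He. rewrite Rabs_R0.
    assert (0 <= e ^ k) by (apply pow_le; lra). nra.
  - apply little_o_plus; [apply IHn; intros; apply H | apply H]; lia.
Qed.

Lemma big_O_pow k c : big_O k (fun e => c * e ^ k).
Proof.
  exists (Rabs c), 1. split; [lra|]. intros e He.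
  rewrite Rabs_mult, (Rabs_pos_eq (e ^ k)) by (apply pow_le; lra). lra.
Qed.

Lemma big_O_mult k m u v : big_O k u -> big_O m v -> big_O (k + m) (fun e => u e * v e).
Proof.
  intros [C1 Hu] [C2 Hv]. exists (C1 * C2). refine (near0_mono _ _ _ (near0_and _ _ Hu Hv)).
  intros e _ [A B]. rewrite Rabs_mult, pow_add.
  replace (C1 * C2 * (e ^ k * e ^ m)) with ((C1 * e ^ k) * (C2 * e ^ m)) by ring.
  apply Rmult_le_compat; auto; apply Rabs_pos.
Qed.

Lemma little_o_mult_big_O k m u v : little_o k u -> big_O m v -> little_o (k + m) (fun e => u e * v e).
Proof.
  intros Hu [C Hv] eta Heta. pose proof (Rabs_pos C). pose proof (Rle_abs C).
  set (eta' := eta / (Rabs C + 1)). assert (Heta' : eta' > 0) by (apply Rdiv_lt_0_compat; lra).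
  refine (near0_mono _ _ _ (near0_and _ _ (Hu eta' Heta') Hv)).
  intros e He [A B]. rewrite Rabs_mult, pow_add.
  assert (0 <= e ^ k) by (apply pow_le; lra). assert (0 <= e ^ m) by (apply pow_le; lra).
  pose proof (Rabs_pos (u e)). pose proof (Rabs_pos (v e)).
  assert (Rabs (u e) * Rabs (v e) <= eta' * e ^ k * (Rabs C * e ^ m)).
  { apply Rmult_le_compat; auto. nra. }
  assert (eta' * (Rabs C + 1) = eta) by (unfold eta'; field; lra).
  assert (0 <= eta' * e ^ k * e ^ m) by (apply Rmult_le_pos; [|assumption]; apply Rmult_le_pos; lra).
  nra.
Qed.

Lemma little_o_of_big_O k u : big_O (S k) u -> little_o k u.
Proof.
  intros [C Hu] eta Heta. pose proof (Rabs_pos C). pose proof (Rle_abs C).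
  set (w := eta / (Rabs C + 1)). assert (Hw : w > 0) by (apply Rdiv_lt_0_compat; lra).
  refine (near0_mono _ _ _ (near0_and _ _ Hu (near0_lt w Hw))).
  intros e He [A B]. eapply Rle_trans; [exact A|]. simpl.
  assert (0 <= e ^ k) by (apply pow_le; lra).
  assert (e * (Rabs C + 1) <= eta) by (unfold w in B; apply Rmult_lt_compat_r with (r := Rabs C + 1) in B;
    [field_simplify in B; lra | lra]).
  assert (C * e <= eta) by nra.
  replace (C * (e * e ^ k)) with ((C * e) * e ^ k) by ring. now apply Rmult_le_compat_r.
Qed.

Lemma big_O_of_little_o k u : little_o k u -> big_O k u.
Proof. intros H. exists 1. apply H. lra. Qed.

Lemma big_O_weaken k u : big_O (S k) u -> big_O k u.
Proof. intros H. now apply big_O_of_little_o, little_o_of_big_O. Qed.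

(** * Consequences of [C^1] and of condition (R) *)

(** Once the lower integral of [rho] is approximated within [eta] on some [[0, T0]],
    every minorant of [rho] on a later interval has integral at most [eta]. *)
Lemma fin_int_tail (rho : R -> R) :
  fin_int (fun t y => y <= rho t) -> (forall t, 0 <= t -> 0 <= rho t) ->
  forall eta, eta > 0 -> exists T0, 0 <= T0 /\ forall T w, T0 <= T -> cont_nonneg w ->
    (forall t, T0 <= t <= T -> w t <= rho t) -> RInt w T0 T <= eta.
Proof.
  intros [M HM] Hrho eta Heta.
  set (E := fun x => exists T phi (pr : Riemann_integrable phi 0 T), 0 <= T /\
              (forall t, 0 <= t <= T -> phi t <= rho t) /\ x = RiemannInt pr).
  destruct (completeness E) as [L [HL1 HL2]].
  { exists M. intros x [T [phi [pr [HT [Hp ->]]]]]. now apply HM. }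
  { assert (pr0 : Riemann_integrable (fun _ => 0) 0 0) by apply ex_RInt_Reals_0, ex_RInt_const.
    exists (RiemannInt pr0), 0, (fun _ => 0), pr0. split; [lra|]. split; [|reflexivity].
    intros t Ht. apply Hrho. lra. }
  destruct (Classical_Prop.classic (exists x, E x /\ x > L - eta)) as [[x [Ex Hx]]|Hn].
  2: { exfalso. assert (L <= L - eta); [|lra]. apply HL2. intros y Ey.
       destruct (Rle_dec y (L - eta)) as [|Hy]; [assumption|].
       exfalso. apply Hn. exists y. split; [exact Ey | lra]. }
  destruct Ex as [T0 [m [pr [HT0 [Hm ->]]]]].
  exists T0. split; [exact HT0|]. intros T w HT Hw Hwr.
  set (phi := fun t => if Rle_dec t T0 then m t else w t).
  assert (Eleft : forall y, Rmin 0 T0 < y < Rmax 0 T0 -> m y = phi y).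
  { intros y Hy. rewrite Rmin_left, Rmax_right in Hy by lra. unfold phi.
    destruct (Rle_dec y T0); [reflexivity | lra]. }
  assert (Eright : forall y, Rmin T0 T < y < Rmax T0 T -> w y = phi y).
  { intros y Hy. rewrite Rmin_left, Rmax_right in Hy by lra. unfold phi.
    destruct (Rle_dec y T0); [lra | reflexivity]. }
  assert (X1 : ex_RInt phi 0 T0) by (apply (ex_RInt_ext m _ _ _ Eleft), ex_RInt_Reals_1, pr).
  assert (X2 : ex_RInt phi T0 T) by (apply (ex_RInt_ext w _ _ _ Eright), ex_RInt_cont_nonneg; assumption).
  set (pr2 := ex_RInt_Reals_0 _ _ _ (ex_RInt_Chasles phi 0 T0 T X1 X2)).
  assert (Hle : RiemannInt pr2 <= L).
  { apply HL1. exists T, phi, pr2. split; [lra|]. split; [|reflexivity].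
    intros t Ht. unfold phi. destruct (Rle_dec t T0); [apply Hm | apply Hwr]; lra. }
  rewrite <- RInt_Reals, <- (RInt_Chasles phi 0 T0 T X1 X2) in Hle.
  rewrite <- (RInt_ext m phi 0 T0 Eleft), <- (RInt_ext w phi T0 T Eright) in Hle.
  rewrite <- RInt_Reals in Hx. unfold plus in Hle; simpl in Hle. lra.
Qed.

Definition increment (phi psi : R -> R) eps t := phi (t + eps) - phi t - eps * psi t.

Section Increment.

Variables (phi psi : R -> R) (r : R -> R -> R).
Hypothesis Hphi : C1_nonneg phi psi.

Lemma increment_cont_nonneg eps : 0 <= eps -> cont_nonneg (increment phi psi eps).
Proof.
  intros He. unfold increment.
  apply cont_nonneg_minus; [apply cont_nonneg_minus; [apply cont_nonneg_shift; [exact He|]|]|apply cont_nonneg_scal];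
    [apply (C1_cont _ _ Hphi) | apply (C1_cont _ _ Hphi) | apply (C1_cont_deriv _ _ Hphi)].
Qed.

Lemma increment_uniform T0 : 0 <= T0 -> forall eta, eta > 0 ->
  near0 (fun eps => forall s, 0 <= s <= T0 -> Rabs (increment phi psi eps s) <= eta * eps).
Proof.
  intros HT0 eta Heta.
  assert (Hcont : forall x, 0 <= x <= T0 + 1 -> continuity_pt (fun t => psi (Rmax 0 t)) x)
    by (intros x _; apply (C1_cont_deriv _ _ Hphi)).
  destruct (Heine_cor2 Hcont (mkposreal eta Heta)) as [dl Hdl]. simpl in Hdl.
  refine (near0_mono _ _ _ (near0_and _ _ (near0_lt dl (cond_pos dl)) (near0_lt 1 Rlt_0_1))).
  intros eps He [Hdl' H1] s Hs.
  destruct (C1_mean_value _ _ Hphi s eps ltac:(lra) He) as [c [Hc E]].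
  unfold increment. rewrite E, Rabs_mult, Rabs_pos_eq, Rmult_comm by lra.
  apply Rmult_le_compat_r; [lra|]. specialize (Hdl c s ltac:(lra) ltac:(lra)).
  rewrite !Rmax_right in Hdl by lra. left. apply Hdl. rewrite Rabs_pos_eq; lra.
Qed.

Hypothesis Hr : forall t e, 0 <= t -> e > 0 -> Rabs (increment phi psi e t) <= r t e.
Hypothesis Hr_mono : forall t e e', 0 <= t -> 0 < e -> e <= e' -> r t e / e <= r t e' / e'.

(** The tail of [increment eps] is controlled through [r t eps / eps <= r t e2 / e2]. *)
Lemma increment_tail e2 : e2 > 0 -> fin_int (fun t y => y <= r t e2) ->
  forall eta, eta > 0 -> exists T0, 0 <= T0 /\ forall eps, 0 < eps <= e2 -> forall T, T0 <= T ->
    RInt (fun t => Rabs (increment phi psi eps t)) T0 T <= eta * eps.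
Proof.
  intros He2 Hfin eta Heta.
  assert (Hrpos : forall t, 0 <= t -> 0 <= r t e2)
    by (intros t Ht; eapply Rle_trans; [apply Rabs_pos | apply Hr; lra]).
  destruct (fin_int_tail _ Hfin Hrpos (eta * e2) ltac:(nra)) as [T0 [HT0 Htail]].
  exists T0. split; [exact HT0|]. intros eps [He Hee] T HT.
  assert (Hc : cont_nonneg (fun t => Rabs (increment phi psi eps t)))
    by (apply cont_nonneg_abs, increment_cont_nonneg; lra).
  assert (Hw : RInt (fun t => e2 / eps * Rabs (increment phi psi eps t)) T0 T <= eta * e2).
  { apply Htail; [exact HT | now apply cont_nonneg_scal|]. intros t Ht.
    assert (A1 : Rabs (increment phi psi eps t) <= r t eps) by (apply Hr; lra).
    assert (A2 : r t eps / eps <= r t e2 / e2) by (apply Hr_mono; lra).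
    apply (Rmult_le_reg_l (/ e2)); [apply Rinv_0_lt_compat; lra|].
    replace (/ e2 * (e2 / eps * Rabs (increment phi psi eps t))) with (Rabs (increment phi psi eps t) / eps)
      by (field; lra).
    replace (/ e2 * r t e2) with (r t e2 / e2) by (field; lra).
    eapply Rle_trans; [|exact A2]. apply Rmult_le_compat_r; [left; apply Rinv_0_lt_compat|]; lra. }
  rewrite (RInt_scal (fun t => Rabs (increment phi psi eps t))) in Hw
    by (apply ex_RInt_cont_nonneg; [exact Hc | lra | exact HT]).
  unfold scal in Hw; simpl in Hw; unfold mult in Hw; simpl in Hw.
  apply (Rmult_le_reg_l (e2 / eps)); [apply Rdiv_lt_0_compat; lra|].
  replace (e2 / eps * (eta * eps)) with (eta * e2) by (field; lra). exact Hw.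
Qed.

Lemma increment_integral_small e2 : e2 > 0 -> fin_int (fun t y => y <= r t e2) ->
  forall eta, eta > 0 -> near0 (fun eps => forall T, 0 <= T ->
    RInt (fun s => Rabs (increment phi psi eps s)) 0 T <= eta * eps).
Proof.
  intros He2 Hfin eta Heta.
  destruct (increment_tail e2 He2 Hfin (eta / 2) ltac:(lra)) as [T0 [HT0 Htail]].
  set (w := eta / (2 * (T0 + 1))). assert (Hw : w > 0) by (apply Rdiv_lt_0_compat; lra).
  assert (HwT : T0 * w <= eta / 2).
  { unfold w. replace (T0 * (eta / (2 * (T0 + 1)))) with (eta / 2 * (T0 / (T0 + 1))) by (field; lra).
    assert (T0 / (T0 + 1) <= 1); [|nra].
    apply (Rmult_le_reg_r (T0 + 1)); [lra|]. field_simplify; lra. }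
  refine (near0_mono _ _ _ (near0_and _ _ (increment_uniform T0 HT0 w Hw) (near0_lt e2 He2))).
  intros eps He [Hpt Hle] T HT.
  assert (X : forall a b, 0 <= a <= b -> ex_RInt (fun s => Rabs (increment phi psi eps s)) a b)
    by (intros; apply ex_RInt_cont_nonneg; [apply cont_nonneg_abs, increment_cont_nonneg|..]; lra).
  assert (Hhead : forall b, 0 <= b <= T0 ->
            RInt (fun s => Rabs (increment phi psi eps s)) 0 b <= b * (w * eps)).
  { intros b Hb. eapply Rle_trans; [apply Rle_abs|].
    replace b with (b - 0) at 2 by ring. apply RInt_abs_le_const; [lra | apply X; lra|].
    intros x Hx. rewrite Rabs_Rabsolu. apply Hpt. lra. }
  assert (0 <= w * eps) by nra.
  destruct (Rle_dec T T0).
  - eapply Rle_trans; [apply Hhead; lra|]. assert (T * (w * eps) <= T0 * (w * eps)) by nra. nra.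
  - rewrite <- (RInt_Chasles _ 0 T0 T) by (apply X; lra). unfold plus; simpl.
    specialize (Hhead T0 ltac:(lra)). specialize (Htail eps ltac:(lra) T ltac:(lra)). nra.
Qed.

End Increment.

Lemma C1_big_O0 phi psi : C1_nonneg phi psi -> big_O 0 phi.
Proof.
  intros Hphi. destruct (cont_nonnegE phi (C1_cont _ _ Hphi) 0 (Rle_refl 0) 1 Rlt_0_1) as [d [Hd A]].
  exists (Rabs (phi 0) + 1), d. split; [exact Hd|]. intros e He. simpl. rewrite Rmult_1_r.
  specialize (A e ltac:(lra) ltac:(rewrite Rminus_0_r, Rabs_pos_eq; lra)).
  pose proof (Rabs_triang (phi e - phi 0) (phi 0)).
  replace (phi e - phi 0 + phi 0) with (phi e) in * by ring. lra.
Qed.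

Lemma C1_taylor1 phi psi : C1_nonneg phi psi -> little_o 1 (fun t => phi t - phi 0 - t * psi 0).
Proof.
  intros [Hd _] eta Heta. destruct (Hd 0 (Rle_refl 0) eta Heta) as [d [Hdpos A]].
  exists d. split; [exact Hdpos|]. intros t Ht.
  specialize (A t ltac:(lra) ltac:(rewrite Rabs_pos_eq; lra) ltac:(lra)). rewrite Rplus_0_l in A.
  replace (phi t - phi 0 - t * psi 0) with (t * ((phi t - phi 0) / t - psi 0)) by (field; lra).
  rewrite Rabs_mult, Rabs_pos_eq, Rmult_comm by lra. simpl. rewrite Rmult_1_r.
  apply Rmult_le_compat_r; lra.
Qed.

Lemma trans_big_O2 N Q i j : (i < N)%nat -> (j < N)%nat ->
  big_O 2 (fun t => trans N Q t i j - kron i j - t * Q i j).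
Proof.
  intros Hi Hj. pose proof (mx_bound_ge1 N Q). exists (2 * mx_bound N Q ^ 2), (/ (2 * mx_bound N Q)).
  split; [apply Rinv_0_lt_compat; lra|]. intros e He. apply trans_taylor1; [exact Hi | exact Hj | lra|].
  assert (/ (2 * mx_bound N Q) * mx_bound N Q = / 2) by (field; lra). nra.
Qed.

Lemma trans_big_O3 N Q i j : (i < N)%nat -> (j < N)%nat ->
  big_O 3 (fun t => trans N Q t i j - (kron i j + t * Q i j + t ^ 2 / 2 * matpow N Q 2 i j)).
Proof.
  intros Hi Hj. pose proof (mx_bound_ge1 N Q). exists (2 * mx_bound N Q ^ 3), (/ (2 * mx_bound N Q)).
  split; [apply Rinv_0_lt_compat; lra|]. intros e He.
  replace (2 * mx_bound N Q ^ 3 * e ^ 3) with (2 * (e * mx_bound N Q) ^ 3) by ring.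
  apply trans_taylor2; [exact Hi | exact Hj | lra|].
  assert (/ (2 * mx_bound N Q) * mx_bound N Q = / 2) by (field; lra). nra.
Qed.

Lemma RInt_taylor2 (a : R -> R) a0 a1 : cont_nonneg a ->
  little_o 1 (fun t => a t - a0 - t * a1) ->
  little_o 2 (fun eps => RInt a 0 eps - eps * a0 - eps ^ 2 / 2 * a1).
Proof.
  intros Ha H eta Heta. destruct (H eta Heta) as [dl [Hdl A]].
  exists dl. split; [exact Hdl|]. intros eps He.
  assert (P : RInt (fun t => a0 + t * a1) 0 eps = eps * a0 + eps ^ 2 / 2 * a1).
  { apply is_RInt_unique.
    replace (eps * a0 + eps ^ 2 / 2 * a1) with (minus (a0 * eps + a1 * eps ^ 2 / 2) (a0 * 0 + a1 * 0 ^ 2 / 2))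
      by (unfold minus, plus, opp; simpl; field).
    apply (is_RInt_derive (fun t => a0 * t + a1 * t ^ 2 / 2)).
    - intros. auto_derive; [exact I | field].
    - intros. apply continuity_pt_filterlim. reg. }
  assert (Xa : ex_RInt a 0 eps) by (apply ex_RInt_cont_nonneg; [exact Ha | lra | lra]).
  assert (Xp : ex_RInt (fun t => a0 + t * a1) 0 eps)
    by (apply (@ex_RInt_continuous R_CompleteNormedModule); intros; apply continuity_pt_filterlim; reg).
  replace (RInt a 0 eps - eps * a0 - eps ^ 2 / 2 * a1) with (RInt (fun t => a t - (a0 + t * a1)) 0 eps)
    by (rewrite (RInt_minus a (fun t => a0 + t * a1)), P by assumption; unfold minus, plus, opp; simpl; ring).
  replace (eta * eps ^ 2) with ((eps - 0) * (eta * eps ^ 1)) by ring.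
  apply RInt_abs_le_const; [lra | apply (ex_RInt_minus a (fun t => a0 + t * a1)); assumption|].
  intros x Hx. replace (a x - (a0 + x * a1)) with (a x - a0 - x * a1) by ring.
  eapply Rle_trans; [apply A; lra|]. apply Rmult_le_compat_l; simpl; lra.
Qed.

(** * Payoffs of the chain and the second-order expansion *)

Section Payoffs.

Variables (N : nat) (D : nat -> (nat -> R) -> Prop).
Hypothesis HD : forall i q, (i < N)%nat -> D i q -> InE N i q.

Definition payoff_rate (g : Payoff) Q i t := sumN N (fun j => trans N Q t i j * g t j (Q j)).

(** [H_k(eps)]: the value from [k] with the clock advanced by [eps]. *)
Definition shifted_value (g : Payoff) Q k eps :=
  Int0inf (fun s => sumN N (fun j => trans N Q s k j * g (s + eps) j (Q j))).

Lemma condI_RInt_bound (g : Payoff) j q : condI N D g -> (j < N)%nat -> D j q ->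
  cont_nonneg (fun t => g t j q) -> exists M, forall T, 0 <= T -> RInt (fun t => Rabs (g t j q)) 0 T <= M.
Proof.
  intros HI Hj Hq Hc. assert (0 <= vnorm N q) by (apply sumN_ge0; intros; apply Rabs_pos).
  destruct (HI (vnorm N q + 1) ltac:(lra)) as [M HM]. exists M. intros T HT.
  assert (X : ex_RInt (fun t => Rabs (g t j q)) 0 T) by (apply ex_RInt_cont_nonneg; [apply cont_nonneg_abs| |]; auto; lra).
  rewrite (RInt_Reals _ _ _ (ex_RInt_Reals_0 _ _ _ X)). apply HM; [exact HT|].
  intros t Ht d Hd. exists j, q. repeat split; auto; lra.
Qed.

Section Value.

Variables (g : Payoff) (Q : nat -> nat -> R).
Hypotheses (HgI : condI N D g) (HQ : InQ N D Q)
  (Hg : forall j, (j < N)%nat -> cont_nonneg (fun t => g t j (Q j))).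

Lemma shifted_value_spec k c : (k < N)%nat -> 0 <= c ->
  is_improper (fun s => sumN N (fun j => trans N Q s k j * g (s + c) j (Q j))) (shifted_value g Q k c).
Proof.
  intros Hk Hc. pose proof (generator_of_InQ N D Q HD HQ) as G.
  assert (Hshift : forall j, (j < N)%nat -> cont_nonneg (fun s => g (s + c) j (Q j)))
    by (intros j Hj; now apply (cont_nonneg_shift (fun t => g t j (Q j))), Hg).
  assert (Hint : cont_nonneg (fun s => sumN N (fun j => trans N Q s k j * g (s + c) j (Q j)))).
  { apply cont_nonneg_sumN. intros j Hj.
    apply cont_nonneg_mult; [apply trans_cont_nonneg | apply Hshift]; assumption. }
  assert (Hdom : cont_nonneg (fun s => sumN N (fun j => Rabs (g (s + c) j (Q j)))))
    by (apply cont_nonneg_sumN; intros j Hj; apply cont_nonneg_abs, Hshift, Hj).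
  destruct (sumN_bounded N (fun j T => RInt (fun t => Rabs (g t j (Q j))) 0 T)) as [M HM].
  { intros j Hj. apply (condI_RInt_bound g j (Q j) HgI Hj); [apply HQ | apply Hg]; exact Hj. }
  destruct (is_improper_dominated (fun s => sumN N (fun j => trans N Q s k j * g (s + c) j (Q j)))
              (fun s => sumN N (fun j => Rabs (g (s + c) j (Q j))))) as [l Hl].
  - intros T HT. apply ex_RInt_cont_nonneg; auto; lra.
  - intros T HT. apply ex_RInt_cont_nonneg; auto; lra.
  - intros t Ht. eapply Rle_trans; [apply sumN_abs|]. apply sumN_le. intros j Hj. rewrite Rabs_mult.
    pose proof (trans_abs_le1 N Q t k j G Ht Hk Hj). pose proof (Rabs_pos (g (t + c) j (Q j))).
    pose proof (Rabs_pos (trans N Q t k j)). nra.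
  - exists M. intros T HT.
    assert (X : forall j a b, (j < N)%nat -> 0 <= a <= b -> ex_RInt (fun t => Rabs (g t j (Q j))) a b)
      by (intros; apply ex_RInt_cont_nonneg; [apply cont_nonneg_abs, Hg|..]; auto; lra).
    rewrite RInt_sumN
      by (intros j Hj; apply ex_RInt_cont_nonneg; [apply cont_nonneg_abs, Hshift|..]; auto; lra).
    eapply Rle_trans; [|apply (HM (T + c)); lra]. apply sumN_le. intros j Hj.
    rewrite (RInt_shift (fun t => Rabs (g t j (Q j)))), Rplus_0_l by (apply X; [assumption | lra]).
    rewrite <- (RInt_Chasles _ 0 c (T + c)) by (apply X; [assumption | lra]). unfold plus; simpl.
    assert (0 <= RInt (fun t => Rabs (g t j (Q j))) 0 c)
      by (apply RInt_ge_0; [lra | apply X; [assumption | lra] | intros; apply Rabs_pos]).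
    lra.
  - unfold shifted_value. now rewrite (Int0inf_is_improper _ l Hl).
Qed.

Lemma Fval_spec k : (k < N)%nat -> is_improper (payoff_rate g Q k) (Fval N g Q k).
Proof.
  intros Hk. pose proof (shifted_value_spec k 0 Hk (Rle_refl 0)) as H.
  assert (E : forall t, sumN N (fun j => trans N Q t k j * g (t + 0) j (Q j)) = payoff_rate g Q k t)
    by (intros t; unfold payoff_rate; now rewrite Rplus_0_r).
  apply (is_improper_ext _ _ _ (fun t _ => E t)) in H.
  unfold Fval. fold (payoff_rate g Q k). now rewrite (Int0inf_is_improper _ _ H).
Qed.

Lemma payoff_rate_cont i : (i < N)%nat -> cont_nonneg (payoff_rate g Q i).
Proof.
  intros Hi. apply cont_nonneg_sumN. intros j Hj. apply cont_nonneg_mult; [|now apply Hg].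
  apply trans_cont_nonneg; [apply (generator_of_InQ N D Q HD HQ) | |]; assumption.
Qed.

End Value.

Variables f ft : Payoff.
Hypotheses (HfI : condI N D f) (HC1 : C1_with_deriv N D f ft).

Lemma payoff_C1 Q j : InQ N D Q -> (j < N)%nat ->
  C1_nonneg (fun t => f t j (Q j)) (fun t => ft t j (Q j)).
Proof. intros [HQ _] Hj. exact (HC1 j (Q j) Hj (HQ j Hj)). Qed.

Lemma payoff_cont Q : InQ N D Q -> forall j, (j < N)%nat -> cont_nonneg (fun t => f t j (Q j)).
Proof. intros HQ j Hj. exact (C1_cont _ _ (payoff_C1 Q j HQ Hj)). Qed.

Lemma payoff_deriv_cont Q : InQ N D Q -> forall j, (j < N)%nat -> cont_nonneg (fun t => ft t j (Q j)).
Proof. intros HQ j Hj. exact (C1_cont_deriv _ _ (payoff_C1 Q j HQ Hj)). Qed.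

(** Markov property at time [eps]: after [eps] the chain restarts under [Qs] with the clock advanced. *)
Lemma Fcomp_decompose Q Qs i eps : InQ N D Q -> InQ N D Qs -> (i < N)%nat -> 0 < eps ->
  Fcomp N f Q eps Qs i
  = RInt (payoff_rate f Q i) 0 eps + sumN N (fun k => trans N Q eps i k * shifted_value f Qs k eps).
Proof.
  intros HQ HQs Hi He. unfold Fcomp. apply Int0inf_is_improper.
  set (g := fun t => if Rle_dec t eps then sumN N (fun j => trans N Q t i j * f t j (Q j))
            else sumN N (fun j => sumN N (fun k => trans N Q eps i k * trans N Qs (t - eps) k j)
                                  * f t j (Qs j))).
  assert (E0 : forall x, Rmin 0 eps < x < Rmax 0 eps -> payoff_rate f Q i x = g x).
  { intros x Hx. rewrite Rmin_left, Rmax_right in Hx by lra. unfold g.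
    destruct (Rle_dec x eps); [reflexivity | lra]. }
  rewrite (RInt_ext _ _ _ _ E0). apply is_improper_shift; [lra| |].
  - apply (ex_RInt_ext _ _ _ _ E0), ex_RInt_cont_nonneg; [apply payoff_rate_cont | lra | lra];
      [exact HQ | apply payoff_cont, HQ | exact Hi].
  - apply (is_improper_ext (fun s => sumN N (fun k => trans N Q eps i k *
             sumN N (fun j => trans N Qs s k j * f (s + eps) j (Qs j))))).
    + intros t Ht. unfold g. destruct (Rle_dec (t + eps) eps); [lra|].
      replace (t + eps - eps) with t by ring. symmetry. apply sumN_mul_assoc.
    + apply is_improper_sumN. intros k Hk. apply is_improper_scal, shifted_value_spec;
        [exact HfI | exact HQs | apply payoff_cont, HQs | exact Hk | lra].
Qed.

Lemma Fcomp_self Qs i eps : InQ N D Qs -> (i < N)%nat -> 0 < eps -> Fcomp N f Qs eps Qs i = Fval N f Qs i.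
Proof.
  intros HQs Hi He. unfold Fcomp. apply Int0inf_is_improper.
  eapply is_improper_ext; [|apply Fval_spec; [exact HfI | exact HQs | apply payoff_cont, HQs | exact Hi]].
  intros t Ht. unfold payoff_rate. destruct (Rle_dec t eps); [reflexivity|].
  apply sumN_ext. intros j Hj. f_equal.
  replace t with (eps + (t - eps)) at 1 by ring. now rewrite trans_add.
Qed.

Definition payoff_slope Q i := ft 0 i (Q i) + sumN N (fun j => Q i j * f 0 j (Q j)).

Lemma payoff_rate_taylor1 Q i : InQ N D Q -> (i < N)%nat ->
  little_o 1 (fun t => payoff_rate f Q i t - f 0 i (Q i) - t * payoff_slope Q i).
Proof.
  intros HQ Hi. set (sg := fun j t => f t j (Q j) - f 0 j (Q j) - t * ft 0 j (Q j)).
  apply (little_o_ext 1 (fun t => sumN N (fun j => (trans N Q t i j - kron i j - t * Q i j) * f t j (Q j)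
           + kron i j * sg j t + Q i j * ft 0 j (Q j) * t ^ 2 + sg j t * (t * Q i j)))).
  - intros t _. unfold payoff_rate, payoff_slope.
    transitivity (sumN N (fun j => trans N Q t i j * f t j (Q j))
                  - sumN N (fun j => kron i j * (f 0 j (Q j) + t * ft 0 j (Q j)))
                  - t * sumN N (fun j => Q i j * f 0 j (Q j))).
    + rewrite <- sumN_scal_l, <- !sumN_sub. apply sumN_ext. intros j _. unfold sg. ring.
    + rewrite sumN_kron_l by exact Hi. ring.
  - apply little_o_sumN. intros j Hj. pose proof (payoff_C1 Q j HQ Hj) as C.
    repeat apply little_o_plus.
    + apply little_o_of_big_O, (big_O_mult 2 0); [now apply trans_big_O2 | exact (C1_big_O0 _ _ C)].
    + apply little_o_scal, (C1_taylor1 _ _ C).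
    + apply little_o_of_big_O, big_O_pow.
    + apply (little_o_mult_big_O 1 0); [exact (C1_taylor1 _ _ C)|].
      apply big_O_weaken, (big_O_ext 1 (fun t => Q i j * t ^ 1)); [intros; ring | apply big_O_pow].
Qed.

Lemma RInt_payoff_rate_taylor2 Q i : InQ N D Q -> (i < N)%nat ->
  little_o 2 (fun e => RInt (payoff_rate f Q i) 0 e - e * f 0 i (Q i) - e ^ 2 / 2 * payoff_slope Q i).
Proof.
  intros HQ Hi. apply RInt_taylor2; [|now apply payoff_rate_taylor1].
  apply payoff_rate_cont; [exact HQ | apply payoff_cont, HQ | exact Hi].
Qed.

Hypotheses (HftI : condI N D ft) (HR : condR N D f ft).

Lemma shifted_value_increment Qs k e : InQ N D Qs -> (k < N)%nat -> 0 < e ->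
  is_improper (fun s => sumN N (fun j => trans N Qs s k j *
                  increment (fun t => f t j (Qs j)) (fun t => ft t j (Qs j)) e s))
    (shifted_value f Qs k e - Fval N f Qs k - e * Fval N ft Qs k).
Proof.
  intros HQs Hk He.
  pose proof (shifted_value_spec f Qs HfI HQs (payoff_cont Qs HQs) k e Hk ltac:(lra)) as I1.
  pose proof (Fval_spec f Qs HfI HQs (payoff_cont Qs HQs) k Hk) as I2.
  pose proof (Fval_spec ft Qs HftI HQs (payoff_deriv_cont Qs HQs) k Hk) as I3.
  pose proof (is_improper_plus _ _ _ _ (is_improper_plus _ _ _ _ I1 (is_improper_scal (-1) _ _ I2))
                (is_improper_scal (- e) _ _ I3)) as I.
  replace (shifted_value f Qs k e - Fval N f Qs k - e * Fval N ft Qs k)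
    with (shifted_value f Qs k e + -1 * Fval N f Qs k + - e * Fval N ft Qs k) by ring.
  refine (is_improper_ext _ _ _ _ I). intros t _. unfold payoff_rate, increment.
  rewrite <- !sumN_scal_l, <- !sumN_add. apply sumN_ext. intros. ring.
Qed.

(** Condition (R) makes the clock shift differentiable under the integral sign. *)
Lemma shifted_value_taylor1 Qs k : InQ N D Qs -> (k < N)%nat ->
  little_o 1 (fun e => shifted_value f Qs k e - Fval N f Qs k - e * Fval N ft Qs k).
Proof.
  intros HQs Hk eta Heta. destruct HR as [r Hr].
  pose proof (generator_of_InQ N D Qs HD HQs) as G. pose proof (pos_INR N) as HN.
  set (eta' := eta / (INR N + 1)). assert (He' : eta' > 0) by (apply Rdiv_lt_0_compat; lra).
  assert (Hsmall : near0 (fun e => forall j, (j < N)%nat -> forall T, 0 <= T ->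
            RInt (fun s => Rabs (increment (fun t => f t j (Qs j)) (fun t => ft t j (Qs j)) e s)) 0 T
            <= eta' * e)).
  { apply near0_forall_lt. intros j Hj.
    destruct (Hr j (Qs j) Hj (proj1 HQs j Hj)) as [Hbound [_ [[e1 [He1 Hfin]] Hmono]]].
    apply (increment_integral_small _ _ (fun t e => r t e j (Qs j)) (payoff_C1 Qs j HQs Hj) Hbound Hmono
             (e1 / 2)); [lra | apply Hfin; lra | exact He']. }
  refine (near0_mono _ _ _ Hsmall). intros e He Hint. simpl. rewrite Rmult_1_r.
  apply (is_improper_abs_le _ _ _ 0 (shifted_value_increment Qs k e HQs Hk He)). intros T HT.
  set (inc := fun j => increment (fun t => f t j (Qs j)) (fun t => ft t j (Qs j)) e).
  assert (Xinc : forall j, (j < N)%nat -> cont_nonneg (inc j))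
    by (intros j Hj; apply increment_cont_nonneg; [apply payoff_C1 | lra]; assumption).
  rewrite (RInt_sumN N (fun j s => trans N Qs s k j * inc j s))
    by (intros j Hj; apply ex_RInt_cont_nonneg; [apply cont_nonneg_mult; [apply trans_cont_nonneg | apply Xinc]|..];
        auto; lra).
  eapply Rle_trans; [apply sumN_abs|]. eapply Rle_trans; [apply (sumN_le _ _ (fun _ => eta' * e))|].
  - intros j Hj. eapply Rle_trans; [|apply (Hint j Hj T HT)].
    apply RInt_abs_le; [lra | | |].
    + apply ex_RInt_cont_nonneg; [apply cont_nonneg_mult; [apply trans_cont_nonneg | apply Xinc]|..]; auto; lra.
    + apply ex_RInt_cont_nonneg; [apply cont_nonneg_abs, Xinc|..]; auto; lra.
    + intros x Hx. rewrite Rabs_mult. pose proof (trans_abs_le1 N Qs x k j G ltac:(lra) Hk Hj).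
      pose proof (Rabs_pos (inc j x)). pose proof (Rabs_pos (trans N Qs x k j)). unfold inc in *. nra.
  - rewrite sumN_const. unfold eta'.
    replace (INR N * (eta / (INR N + 1) * e)) with (eta * e * (INR N / (INR N + 1))) by (field; lra).
    assert (INR N / (INR N + 1) <= 1) by (apply (Rmult_le_reg_r (INR N + 1)); [lra | field_simplify; lra]).
    assert (0 <= eta * e) by nra. nra.
Qed.

Definition dev_coef1 Qs Q i :=
  f 0 i (Qs i) - f 0 i (Q i) + sumN N (fun k => (Qs i k - Q i k) * Fval N f Qs k).

Definition dev_coef2 Qs Q i :=
  (payoff_slope Qs i - payoff_slope Q i) / 2
  + sumN N (fun k => (Qs i k - Q i k) * Fval N ft Qs k
                     + (matpow N Qs 2 i k - matpow N Q 2 i k) * Fval N f Qs k / 2).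

Lemma restart_taylor2 Qs Q i : InQ N D Qs -> (i < N)%nat ->
  little_o 2 (fun e => sumN N (fun k => (trans N Qs e i k - trans N Q e i k) * shifted_value f Qs k e)
    - e * sumN N (fun k => (Qs i k - Q i k) * Fval N f Qs k)
    - e ^ 2 * sumN N (fun k => (Qs i k - Q i k) * Fval N ft Qs k
                               + (matpow N Qs 2 i k - matpow N Q 2 i k) * Fval N f Qs k / 2)).
Proof.
  intros HQs Hi.
  set (h := fun k e => shifted_value f Qs k e - Fval N f Qs k - e * Fval N ft Qs k).
  set (rem := fun (X : nat -> nat -> R) k e =>
                trans N X e i k - (kron i k + e * X i k + e ^ 2 / 2 * matpow N X 2 i k)).
  set (d1 := fun k => Qs i k - Q i k). set (d2 := fun k => matpow N Qs 2 i k - matpow N Q 2 i k).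
  apply (little_o_ext 2 (fun e => sumN N (fun k => d2 k * Fval N ft Qs k / 2 * e ^ 3
           + (e * d1 k + e ^ 2 * (d2 k / 2)) * h k e + (rem Qs k e - rem Q k e) * shifted_value f Qs k e))).
  { intros e _. rewrite <- !sumN_scal_l, <- !sumN_sub. apply sumN_ext. intros k _.
    unfold h, rem, d1, d2, Rdiv. ring. }
  apply little_o_sumN. intros k Hk.
  assert (Hh : little_o 1 (h k)) by now apply shifted_value_taylor1.
  apply little_o_plus; [apply little_o_plus|].
  - apply little_o_of_big_O, big_O_pow.
  - apply (little_o_ext 2 (fun e => h k e * (e * d1 k + e ^ 2 * (d2 k / 2)))); [intros; ring|].
    apply (little_o_mult_big_O 1 1); [exact Hh|]. apply big_O_plus.
    + apply (big_O_ext 1 (fun e => d1 k * e ^ 1)); [intros; ring | apply big_O_pow].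
    + apply big_O_weaken, (big_O_ext 2 (fun e => d2 k / 2 * e ^ 2)); [intros; ring | apply big_O_pow].
  - apply little_o_of_big_O, (big_O_mult 3 0).
    + apply (big_O_ext 3 (fun e => rem Qs k e + -1 * rem Q k e)); [intros; ring|].
      apply big_O_plus; [|apply big_O_scal]; apply trans_big_O3; assumption.
    + apply (big_O_ext 0 (fun e => Fval N f Qs k * e ^ 0 + Fval N ft Qs k * e ^ 1 + h k e));
        [intros; unfold h; ring|].
      apply big_O_plus; [apply big_O_plus; [apply big_O_pow | apply big_O_weaken, big_O_pow]|].
      apply big_O_weaken, big_O_of_little_o, Hh.
Qed.

Lemma deviation_taylor2 Qs Q i : InQ N D Qs -> InQ N D Q -> (i < N)%nat ->
  little_o 2 (fun e => (Fval N f Qs i - Fcomp N f Q e Qs i) - dev_coef1 Qs Q i * e - dev_coef2 Qs Q i * e ^ 2).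
Proof.
  intros HQs HQ Hi.
  apply (little_o_ext 2 (fun e =>
    (RInt (payoff_rate f Qs i) 0 e - e * f 0 i (Qs i) - e ^ 2 / 2 * payoff_slope Qs i)
    + -1 * (RInt (payoff_rate f Q i) 0 e - e * f 0 i (Q i) - e ^ 2 / 2 * payoff_slope Q i)
    + (sumN N (fun k => (trans N Qs e i k - trans N Q e i k) * shifted_value f Qs k e)
       - e * sumN N (fun k => (Qs i k - Q i k) * Fval N f Qs k)
       - e ^ 2 * sumN N (fun k => (Qs i k - Q i k) * Fval N ft Qs k
                                  + (matpow N Qs 2 i k - matpow N Q 2 i k) * Fval N f Qs k / 2)))).
  - intros e He. rewrite <- (Fcomp_self Qs i e), !Fcomp_decompose by assumption.
    rewrite (sumN_ext _ _ (fun k => trans N Qs e i k * shifted_value f Qs k e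
                                    - trans N Q e i k * shifted_value f Qs k e)), sumN_sub by (intros; ring).
    unfold dev_coef1, dev_coef2. field.
  - apply little_o_plus; [apply little_o_plus; [|apply little_o_scal] | now apply restart_taylor2];
      now apply RInt_payoff_rate_taylor2.
Qed.

End Payoffs.

(** * The sign of the deviation *)

Section SecondOrderSign.

Variables (Df : R -> R) (c1 c2 : R).
Hypothesis Hexp : little_o 2 (fun e => Df e - c1 * e - c2 * e ^ 2).

Lemma taylor1_of_taylor2 : little_o 1 (fun e => Df e - c1 * e).
Proof.
  apply (little_o_ext 1 (fun e => (Df e - c1 * e - c2 * e ^ 2) + c2 * e ^ 2)); [intros; ring|].
  apply little_o_plus; [|apply little_o_of_big_O, big_O_pow].
  intros eta Heta. refine (near0_mono _ _ _ (near0_and _ _ (Hexp eta Heta) (near0_lt 1 Rlt_0_1))).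
  intros e He [A B]. eapply Rle_trans; [exact A|].
  apply Rmult_le_compat_l; [lra|]. simpl. nra.
Qed.

Lemma taylor2_coef1_ge0 : (forall d, d > 0 -> near0 (fun e => Df e / e > - d)) -> c1 >= 0.
Proof.
  intros Hweak. destruct (Rge_or_gt c1 0) as [|Hc]; [assumption|]. exfalso.
  destruct (near0_exists_below _ (near0_and _ _ (taylor1_of_taylor2 (- c1 / 4) ltac:(lra))
              (Hweak (- c1 / 2) ltac:(lra))) 1 Rlt_0_1) as [e [He [A B]]].
  simpl in A. rewrite Rmult_1_r in A. apply Rabs_le_between' in A.
  assert (Df e / e <= 3 * c1 / 4); [|lra].
  apply (Rmult_le_reg_r e); [lra|]. unfold Rdiv. rewrite Rmult_assoc, Rinv_l by lra. lra.
Qed.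

Lemma taylor2_eventually_ge0 : c1 > 0 \/ (c1 = 0 /\ c2 > 0) -> near0 (fun e => Df e >= 0).
Proof.
  intros [Hc | [-> Hc2]].
  - refine (near0_mono _ _ _ (taylor1_of_taylor2 c1 Hc)). intros e He A.
    simpl in A. apply Rabs_le_between' in A. nra.
  - refine (near0_mono _ _ _ (Hexp c2 Hc2)). intros e He A.
    apply Rabs_le_between' in A. lra.
Qed.

Lemma taylor2_eventually_lt0 : c1 = 0 -> c2 < 0 -> near0 (fun e => Df e < 0).
Proof.
  intros -> Hc2. refine (near0_mono _ _ _ (Hexp (- c2 / 2) ltac:(lra))). intros e He A.
  apply Rabs_le_between' in A. assert (0 < e ^ 2) by (apply pow_lt; lra). nra.
Qed.

End SecondOrderSign.

Lemma dev_coef1_Gamma N f Qs Q i :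
  dev_coef1 N f Qs Q i = Gamma N f Qs i (Qs i) - Gamma N f Qs i (Q i).
Proof.
  unfold dev_coef1, Gamma.
  rewrite (sumN_ext _ _ (fun k => Qs i k * Fval N f Qs k - Q i k * Fval N f Qs k)), sumN_sub by (intros; ring).
  ring.
Qed.

Lemma Lambda_expand N f ft Qs Q i : (i < N)%nat ->
  Lambda N f ft Qs i Q = payoff_slope N f ft Q i + 2 * sumN N (fun j => Q i j * Fval N ft Qs j)
                         + sumN N (fun k => matpow N Q 2 i k * Fval N f Qs k).
Proof.
  intros Hi. unfold Lambda, payoff_slope, Gamma.
  assert (E : sumN N (fun k => matpow N Q 2 i k * Fval N f Qs k)
              = sumN N (fun j => Q i j * sumN N (fun l => Q j l * Fval N f Qs l))).
  { rewrite (sumN_ext _ _ (fun k => sumN N (fun j => Q i j * (Q j k * Fval N f Qs k)))).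
    - rewrite sumN_exchange. apply sumN_ext. intros. now rewrite sumN_scal_l.
    - intros k Hk. rewrite matpow_2, <- sumN_scal_r by exact Hi. apply sumN_ext. intros; ring. }
  rewrite E, <- sumN_scal_l, Rplus_assoc, Rplus_assoc, <- !sumN_add. f_equal.
  apply sumN_ext. intros; ring.
Qed.

Lemma dev_coef2_Lambda N f ft Qs Q i : (i < N)%nat ->
  2 * dev_coef2 N f ft Qs Q i = Lambda N f ft Qs i Qs - Lambda N f ft Qs i Q.
Proof.
  intros Hi. rewrite !Lambda_expand by exact Hi. unfold dev_coef2.
  rewrite (sumN_ext _ _ (fun k => (Qs i k * Fval N ft Qs k - Q i k * Fval N ft Qs k)
             + / 2 * (matpow N Qs 2 i k * Fval N f Qs k - matpow N Q 2 i k * Fval N f Qs k)))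
    by (intros; unfold Rdiv; ring).
  rewrite sumN_add, sumN_scal_l, !sumN_sub. field.
Qed.

Theorem mainTheorem5 (N : nat) (D : nat -> (nat -> R) -> Prop)
  (HD : forall i q, (i < N)%nat -> D i q -> InE N i q)
  (f ft : Payoff)
  (HfI : condI N D f)
  (HC1 : C1_with_deriv N D f ft)
  (HftI : condI N D ft)
  (HR : condR N D f ft)
  (Qs : nat -> nat -> R) (HQs : InQ N D Qs)
  (Hweak : weak_eq N D f Qs) :
  ((forall i Q, InRset N D f Qs i Q -> Lambda N f ft Qs i Qs > Lambda N f ft Qs i Q) ->
     strong_eq N D f Qs) /\
  ((exists i Q, InRset N D f Qs i Q /\ Lambda N f ft Qs i Qs < Lambda N f ft Qs i Q) ->
     ~ strong_eq N D f Qs).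
Proof.
  pose proof (deviation_taylor2 N D HD f ft HfI HC1 HftI HR Qs) as Hexp.
  split.
  - intros Hlam Q i HQ Hi.
    destruct (Classical_Prop.classic (Q = Qs)) as [-> | Hne].
    { exists 1. split; [lra|]. intros e He.
      rewrite (Fcomp_self N D HD f ft HfI HC1 Qs i e) by (assumption || lra). lra. }
    specialize (Hexp Q i HQs HQ Hi).
    apply near0_closed, (near0_mono (fun e => Fval N f Qs i - Fcomp N f Q e Qs i >= 0)); [intros; lra|].
    apply (taylor2_eventually_ge0 _ _ _ Hexp).
    pose proof (taylor2_coef1_ge0 _ _ _ Hexp (Hweak Q i HQ Hi)) as Hc1.
    destruct (Rle_lt_or_eq_dec 0 _ (Rge_le _ _ Hc1)) as [Hc1_pos | Hc1_0]; [now left | right].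
    assert (HG : Gamma N f Qs i (Qs i) = Gamma N f Qs i (Q i))
      by (pose proof (dev_coef1_Gamma N f Qs Q i); lra).
    specialize (Hlam i Q (conj Hi (conj HQ (conj Hne HG)))).
    pose proof (dev_coef2_Lambda N f ft Qs Q i Hi). split; lra.
  - intros [i [Q [[Hi [HQ [Hne HG]]] Hlt]]] Hstrong.
    specialize (Hexp Q i HQs HQ Hi).
    assert (Hc1 : dev_coef1 N f Qs Q i = 0) by (rewrite dev_coef1_Gamma; lra).
    assert (Hc2 : dev_coef2 N f ft Qs Q i < 0) by (pose proof (dev_coef2_Lambda N f ft Qs Q i Hi); lra).
    destruct (Hstrong Q i HQ Hi) as [e [He Hge]].
    destruct (near0_exists_below _ (taylor2_eventually_lt0 _ _ _ Hexp Hc1 Hc2) e He) as [e' [He' Hneg]].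
    specialize (Hge e' He'). lra.
Qed.
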